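(* Let $Z>0$, $R>0$, and $k>0$ with $k\neq m\pi/Z$ for every integer $m\ge1$. For $m\ge1$ set $k_m=\sqrt{k^2-m^2\pi^2/Z^2}$ if $k>m\pi/Z$ and $k_m=\mathrm{i}\sqrt{m^2\pi^2/Z^2-k^2}$ otherwise, and let $h(t)=tH_1^{(1)\prime}(t)/H_1^{(1)}(t)$ with $H_1^{(1)}$ the Hankel function of the first kind of order one. Let $\Gamma_R=\{(R,z):0<z<Z\}$, let $H^{1/2}_0(\Gamma_R)$ be the space of $v=\sum_{m\ge1}v_m\sin(m\pi z/Z)$ with norm $\|v\|_{H^{1/2}(\Gamma_R)}^2=\sum_{m\ge1}m|v_m|^2<\infty$, and let $H^{-1/2}(\Gamma_R)$ be its dual (pairing $\langle\xi,v\rangle_{\Gamma_R}=\int_0^Z\xi\bar v\,\mathrm{d}z$), normed equivalently by $\|\xi\|_{H^{-1/2}(\Gamma_R)}^2=\sum_{m\ge1}m^{-1}|\xi_m|^2$ for $\xi=\sum\xi_m\sin(m\pi z/Z)$. Define $T:H^{1/2}_0(\Gamma_R)\to H^{-1/2}(\Gamma_R)$ by $T\eta=\sum_{m\ge1}h(k_mR)\eta_m\sin(m\pi z/Z)$. Then there exists a constant $C>0$ depending only on $k$, $R$ and $Z$ such that $\|Tv\|_{H^{-1/2}(\Gamma_R)}\le C\|v\|_{H^{1/2}(\Gamma_R)}$ for all $v\in H^{1/2}_0(\Gamma_R)$. *)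

From Stdlib Require Import Reals Factorial.
From Coquelicot Require Export Coquelicot.
Open Scope R_scope.

Definition CSeries (a : nat -> C) : C :=
  (Series (fun n => Re (a n)), Series (fun n => Im (a n))).

(* Principal argument in (-PI, PI]  (value 0 at z = 0, irrelevant). *)
Definition Carg (z : C) : R :=
  if Rlt_dec 0 (Re z) then atan (Im z / Re z)
  else if Rlt_dec (Re z) 0 then
         (if Rle_dec 0 (Im z) then atan (Im z / Re z) + PI
          else atan (Im z / Re z) - PI)
  else if Rlt_dec 0 (Im z) then PI / 2
  else if Rlt_dec (Im z) 0 then - (PI / 2) else 0.

Definition Clog (z : C) : C := (ln (Cmod z), Carg z).

Definition harmonic (n : nat) : R :=
  match n with O => 0 | S p => sum_f_R0 (fun j => / INR (S j)) p end.
Definition euler_gamma : R := real (Lim_seq (fun n => harmonic (S n) - ln (INR (S n)))).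

(* Digamma at positive integers: psi(n+1) = -gamma + H_n. *)
Definition digamma_nat (n : nat) : R := - euler_gamma + harmonic n.

Definition bessel1_term (z : C) (k : nat) : C :=
  Cmult (RtoC ((-1) ^ k / (INR (fact k) * INR (fact (S k)))))
        (Cpow (Cdiv z 2) (2 * k + 1)).

Definition besselJ1 (z : C) : C := CSeries (bessel1_term z).

(* Bessel function of the second kind, order one (DLMF 10.8.1, n = 1),
   principal branch. *)
Definition besselY1 (z : C) : C :=
  Cplus (Cplus (Copp (Cdiv (RtoC 2) (Cmult (RtoC PI) z)))
               (Cmult (Cmult (RtoC (2 / PI)) (Clog (Cdiv z 2))) (besselJ1 z)))
        (Copp (Cmult (RtoC (/ PI))
           (CSeries (fun k => Cmult (RtoC (digamma_nat k + digamma_nat (S k)))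
                                    (bessel1_term z k))))).

Definition hankel1 (z : C) : C := Cplus (besselJ1 z) (Cmult Ci (besselY1 z)).

Definition hfun (t : C) : C := Cdiv (Cmult t (C_derive hankel1 t)) (hankel1 t).

Definition kmode (k Z : R) (m : nat) : C :=
  if Rlt_dec (INR m * PI / Z) k
  then RtoC (sqrt (k ^ 2 - (INR m) ^ 2 * PI ^ 2 / Z ^ 2))
  else Cmult Ci (RtoC (sqrt ((INR m) ^ 2 * PI ^ 2 / Z ^ 2 - k ^ 2))).

(* A function v = sum_{m>=1} v_m sin(m pi z / Z) on Gamma_R is represented by
   its coefficient sequence m |-> v m (the value v 0 is unused). *)
Definition H12_terms (v : nat -> C) : nat -> R :=
  fun n => INR (S n) * (Cmod (v (S n))) ^ 2.
Definition Hm12_terms (xi : nat -> C) : nat -> R :=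
  fun n => (Cmod (xi (S n))) ^ 2 / INR (S n).

Definition in_H12 (v : nat -> C) : Prop := ex_series (H12_terms v).
Definition in_Hm12 (xi : nat -> C) : Prop := ex_series (Hm12_terms xi).

Definition H12_norm (v : nat -> C) : R := sqrt (Series (H12_terms v)).
Definition Hm12_norm (xi : nat -> C) : R := sqrt (Series (Hm12_terms xi)).

Definition Top (k Rad Z : R) (v : nat -> C) : nat -> C :=
  fun m => Cmult (hfun (Cmult (kmode k Z m) (RtoC Rad))) (v m).

(* The operator T is diagonal with symbol h(k_m R), so it suffices that |h(k_m R)| <= K m.
   For all but finitely many m, k_m R = i y with y comparable to m, and the point is the
   bound |h(i y)| <= C y for large y.  Along the imaginary axis the real and imaginary parts
   of f(y) = H(i y) and p(y) = i y H'(i y) each solve the real system f' = p / y,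
   p' = (y + 1/y) f, which is Bessel's equation.  Every real solution of this system has
   |p| <= C y |f| eventually: if f keeps a sign, (p + 3 y f) e^(-3y) and (p - 2 y f) e^(2y)
   are nonincreasing; otherwise f p is nondecreasing and vanishes at arbitrarily large points,
   which forces f = p = 0.  Bessel's equation for H is checked on its defining series,
   differentiated termwise; the principal logarithm is only differentiated in the upper half
   plane, away from its branch cut. *)

From Stdlib Require Import Reals Ranalysis5 Factorial Lra Lia Psatz Classical.
From Coquelicot Require Import Coquelicot.
Open Scope R_scope.

Lemma Cmod_le_abs_Re_Im (z : C) : Cmod z <= Rabs (Re z) + Rabs (Im z).
Proof.
  pose proof (Rabs_pos (Re z)); pose proof (Rabs_pos (Im z)).
  apply Rsqr_incr_0_var; [|lra].
  rewrite !Rsqr_pow2, Cmod2_alt, <- (pow2_abs (Re z)), <- (pow2_abs (Im z)). nra.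
Qed.

Lemma Im_le_Cmod (z : C) : Rabs (Im z) <= Cmod z.
Proof.
  apply Rsqr_incr_0_var; [|apply Cmod_ge_0].
  rewrite !Rsqr_pow2, Cmod2_alt, <- (pow2_abs (Im z)). nra.
Qed.

Lemma Cinv_0 : Cinv (RtoC 0) = RtoC 0.
Proof. unfold Cinv, RtoC; simpl. f_equal; unfold Rdiv; ring. Qed.

Lemma ex_series_le_R (a b : nat -> R) :
  (forall k, Rabs (a k) <= b k) -> ex_series b -> ex_series a.
Proof. intros H Hb. exact (@ex_series_le R_AbsRing R_CompleteNormedModule a b H Hb). Qed.

Lemma ex_series_Rplus (a b : nat -> R) :
  ex_series a -> ex_series b -> ex_series (fun k => a k + b k).
Proof. exact (ex_series_plus a b). Qed.

Lemma ex_series_Rminus (a b : nat -> R) :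
  ex_series a -> ex_series b -> ex_series (fun k => a k - b k).
Proof. exact (ex_series_minus a b). Qed.

Lemma ex_series_Rscal (c : R) (a : nat -> R) : ex_series a -> ex_series (fun k => c * a k).
Proof. exact (ex_series_scal_l c a). Qed.

Lemma Series_0 (a : nat -> R) : (forall k, a k = 0) -> Series a = 0.
Proof.
  intros H. rewrite (Series_ext a (fun k => 0 * a k)) by (intros k; rewrite H; ring).
  rewrite Series_scal_l. ring.
Qed.

Lemma Series_ge0 (a : nat -> R) : (forall k, 0 <= a k) -> ex_series a -> 0 <= Series a.
Proof.
  intros Ha Hex. rewrite <- (Series_0 (fun _ => 0)) by reflexivity.
  apply Series_le; auto. intros k; split; [lra | auto].
Qed.

Definition ex_CSeries (u : nat -> C) : Prop :=
  ex_series (fun k => Re (u k)) /\ ex_series (fun k => Im (u k)).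

Lemma ex_CSeries_le (u : nat -> C) (b : nat -> R) :
  (forall k, Cmod (u k) <= b k) -> ex_series b -> ex_CSeries u.
Proof.
  intros H Hb; split; apply ex_series_le_R with b; auto; intros k.
  - eapply Rle_trans; [apply re_le_Cmod | apply H].
  - eapply Rle_trans; [apply Im_le_Cmod | apply H].
Qed.

Lemma Rabs_Series_le (a b : nat -> R) :
  (forall k, Rabs (a k) <= b k) -> ex_series b -> Rabs (Series a) <= Series b.
Proof.
  intros H Hb.
  assert (Habs : ex_series (fun k => Rabs (a k))).
  { apply ex_series_le_R with b; auto. intros k. rewrite Rabs_Rabsolu. apply H. }
  eapply Rle_trans; [apply Series_Rabs; auto |].
  apply Series_le; auto. intros k; split; [apply Rabs_pos | apply H].
Qed.

Lemma Cmod_CSeries_le (u : nat -> C) (b : nat -> R) :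
  (forall k, Cmod (u k) <= b k) -> ex_series b -> Cmod (CSeries u) <= 2 * Series b.
Proof.
  intros H Hb. eapply Rle_trans; [apply Cmod_le_abs_Re_Im |]. unfold CSeries; simpl.
  assert (Rabs (Series (fun k => Re (u k))) <= Series b).
  { apply Rabs_Series_le; auto. intros k. eapply Rle_trans; [apply re_le_Cmod | apply H]. }
  assert (Rabs (Series (fun k => Im (u k))) <= Series b).
  { apply Rabs_Series_le; auto. intros k. eapply Rle_trans; [apply Im_le_Cmod | apply H]. }
  lra.
Qed.

Lemma CSeries_ext (u v : nat -> C) : (forall k, u k = v k) -> CSeries u = CSeries v.
Proof. intros H. unfold CSeries. f_equal; apply Series_ext; intros k; rewrite H; auto. Qed.

Lemma CSeries_0 (u : nat -> C) : (forall k, u k = RtoC 0) -> CSeries u = RtoC 0.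
Proof. intros H. unfold CSeries. rewrite !Series_0; auto; intros k; rewrite H; auto. Qed.

Lemma ex_CSeries_plus (u v : nat -> C) :
  ex_CSeries u -> ex_CSeries v -> ex_CSeries (fun k => u k + v k)%C.
Proof. intros [Hu1 Hu2] [Hv1 Hv2]; split; apply ex_series_Rplus; auto. Qed.

Lemma ex_CSeries_scal (c : C) (u : nat -> C) :
  ex_CSeries u -> ex_CSeries (fun k => c * u k)%C.
Proof.
  intros [Hu1 Hu2]; destruct c as [a b]; split; simpl.
  - apply ex_series_Rminus; apply ex_series_Rscal; auto.
  - apply ex_series_Rplus; apply ex_series_Rscal; auto.
Qed.

Lemma CSeries_plus (u v : nat -> C) : ex_CSeries u -> ex_CSeries v ->
  CSeries (fun k => u k + v k)%C = (CSeries u + CSeries v)%C.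
Proof.
  intros [Hu1 Hu2] [Hv1 Hv2]. unfold CSeries, Cplus; simpl.
  f_equal; rewrite <- Series_plus; auto.
Qed.

Lemma CSeries_scal (c : C) (u : nat -> C) : ex_CSeries u ->
  CSeries (fun k => c * u k)%C = (c * CSeries u)%C.
Proof.
  intros [Hu1 Hu2]. destruct c as [a b]. unfold CSeries, Cmult; simpl. f_equal.
  - rewrite Series_minus by (apply ex_series_Rscal; auto). rewrite !Series_scal_l; auto.
  - rewrite Series_plus by (apply ex_series_Rscal; auto). rewrite !Series_scal_l; auto.
Qed.

Lemma CSeries_incr_1 (u : nat -> C) : ex_CSeries u ->
  CSeries u = (u O + CSeries (fun k => u (S k)))%C.
Proof.
  intros [Hu1 Hu2]. unfold CSeries.
  rewrite (Series_incr_1 (fun k => Re (u k))), (Series_incr_1 (fun k => Im (u k))) by auto.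
  reflexivity.
Qed.

Lemma CSeries_incr_1_aux (u : nat -> C) : u O = RtoC 0 ->
  CSeries u = CSeries (fun k => u (S k)).
Proof. intros H. unfold CSeries. f_equal; apply Series_incr_1_aux; rewrite H; auto. Qed.

(** * Entire series with odd-bounded exponents *)

Definition fast_decay (b : nat -> R) : Prop :=
  forall M, 0 < M -> ex_series (fun k => Rabs (b k) * M ^ k).

Definition gseries (b : nat -> R) (e : nat -> nat) (w : C) : C :=
  CSeries (fun k => RtoC (b k) * Cpow w (e k))%C.

Definition odd_bounded (e : nat -> nat) : Prop := forall k, (e k <= 2 * k + 1)%nat.

Definition deriv_coef (b : nat -> R) (e : nat -> nat) (k : nat) : R := b k * INR (e k) / 2.

Definition deriv_exp (e : nat -> nat) (k : nat) : nat := pred (e k).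

Definition shiftR (b : nat -> R) (k : nat) : R := match k with O => 0 | S j => b j end.

Lemma INR_double_S_le_pow3 (k : nat) : INR (2 * k + 1) <= 3 ^ k.
Proof.
  induction k as [|k IH]; [simpl; lra |].
  replace (2 * S k + 1)%nat with (S (S (2 * k + 1))) by lia.
  rewrite !S_INR. change (3 ^ S k) with (3 * 3 ^ k).
  pose proof (pow_R1_Rle 3 k ltac:(lra)). lra.
Qed.

Lemma pow_double_S (M : R) (k : nat) : M ^ (2 * k + 1) = M * (M ^ 2) ^ k.
Proof. rewrite pow_add, <- pow_mult. simpl; ring. Qed.

Lemma fast_decay_le (b b' : nat -> R) (K : R) :
  (forall k, Rabs (b k) <= K * 3 ^ k * Rabs (b' k)) -> fast_decay b' -> fast_decay b.
Proof.
  intros H Hb' M HM. apply ex_series_le_R with (fun k => K * (Rabs (b' k) * (3 * M) ^ k)).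
  - intros k. assert (0 <= M ^ k) by (apply pow_le; lra).
    rewrite Rabs_mult, Rabs_Rabsolu, (Rabs_pos_eq (M ^ k)), Rpow_mult_distr by auto.
    replace (K * (Rabs (b' k) * (3 ^ k * M ^ k))) with (K * 3 ^ k * Rabs (b' k) * M ^ k) by ring.
    apply Rmult_le_compat_r; auto.
  - apply ex_series_Rscal, Hb'. lra.
Qed.

Lemma fast_decay_mulINR (b : nat -> R) (e : nat -> nat) :
  odd_bounded e -> fast_decay b -> fast_decay (fun k => b k * INR (e k)).
Proof.
  intros He Hb. apply fast_decay_le with b 1; auto. intros k.
  rewrite Rabs_mult, (Rabs_pos_eq (INR (e k))) by apply pos_INR.
  assert (INR (e k) <= 3 ^ k) by (eapply Rle_trans; [apply le_INR, He | apply INR_double_S_le_pow3]).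
  pose proof (Rabs_pos (b k)). nra.
Qed.

Lemma odd_bounded_deriv_exp (e : nat -> nat) : odd_bounded e -> odd_bounded (deriv_exp e).
Proof. intros He k. specialize (He k). unfold deriv_exp. lia. Qed.

Lemma fast_decay_plus (b b' : nat -> R) :
  fast_decay b -> fast_decay b' -> fast_decay (fun k => b k + b' k).
Proof.
  intros Hb Hb' M HM.
  apply ex_series_le_R with (fun k => Rabs (b k) * M ^ k + Rabs (b' k) * M ^ k).
  - intros k. assert (0 <= M ^ k) by (apply pow_le; lra).
    rewrite Rabs_mult, Rabs_Rabsolu, (Rabs_pos_eq (M ^ k)), <- Rmult_plus_distr_r by auto.
    apply Rmult_le_compat_r; auto. apply Rabs_triang.
  - apply ex_series_Rplus; auto.
Qed.

Lemma fast_decay_scal (c : R) (b : nat -> R) : fast_decay b -> fast_decay (fun k => c * b k).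
Proof.
  intros Hb. apply fast_decay_le with b (Rabs c); auto. intros k. rewrite Rabs_mult.
  pose proof (pow_R1_Rle 3 k ltac:(lra)).
  assert (0 <= Rabs c * Rabs (b k)) by (apply Rmult_le_pos; apply Rabs_pos). nra.
Qed.

Lemma fast_decay_shiftR (b : nat -> R) : fast_decay b -> fast_decay (shiftR b).
Proof.
  intros Hb M HM. apply ex_series_incr_1.
  apply ex_series_ext with (fun k => M * (Rabs (b k) * M ^ k)); [intros k; simpl; ring |].
  apply ex_series_Rscal, Hb; auto.
Qed.

Lemma gseries_ext (b b' : nat -> R) (e : nat -> nat) (w : C) :
  (forall k, b k = b' k) -> gseries b e w = gseries b' e w.
Proof. intros H. apply CSeries_ext. intros k. rewrite H. reflexivity. Qed.

Lemma gseries_0 (b : nat -> R) (e : nat -> nat) (w : C) :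
  (forall k, b k = 0) -> gseries b e w = RtoC 0.
Proof. intros H. apply CSeries_0. intros k. rewrite H. ring. Qed.

Lemma Cpow_linear_approx_id (w h : C) (p : nat) :
  (Cpow (w + h) (S p) - Cpow w (S p) - RtoC (INR (S p)) * Cpow w (pred (S p)) * h)%C =
  ((w + h) * (Cpow (w + h) p - Cpow w p - RtoC (INR p) * Cpow w (pred p) * h)
   + RtoC (INR p) * h * h * Cpow w (pred p))%C.
Proof.
  destruct p as [|q]; [simpl; ring |].
  rewrite !S_INR, !RtoC_plus. simpl pred. rewrite !Cpow_S. ring.
Qed.

Lemma Cpow_linear_approx_le (w h : C) (p : nat) : Cmod h <= 1 ->
  Cmod (Cpow (w + h) p - Cpow w p - RtoC (INR p) * Cpow w (pred p) * h)%C
  <= INR p ^ 2 * (Cmod w + 1) ^ p * Cmod h ^ 2.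
Proof.
  intros Hh. set (M := Cmod w + 1).
  assert (HM : 1 <= M) by (unfold M; pose proof (Cmod_ge_0 w); lra).
  assert (Hwh : Cmod (w + h) <= M) by (unfold M; eapply Rle_trans; [apply Cmod_triangle | lra]).
  pose proof (Cmod_ge_0 h).
  induction p as [|p IH].
  - replace (Cpow (w + h) 0 - Cpow w 0 - RtoC (INR 0) * Cpow w (pred 0) * h)%C
      with (RtoC 0) by (simpl; ring).
    rewrite Cmod_0. simpl. nra.
  - rewrite Cpow_linear_approx_id.
    eapply Rle_trans; [apply Cmod_triangle |].
    rewrite !Cmod_mult, Cmod_R, Rabs_pos_eq, Cmod_pow by apply pos_INR.
    set (E := Cmod (Cpow (w + h) p - Cpow w p - RtoC (INR p) * Cpow w (pred p) * h)%C) in *.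
    assert (HE : 0 <= E) by apply Cmod_ge_0.
    assert (HMp : 0 <= M ^ p) by (apply pow_le; lra).
    assert (Hpred : Cmod w ^ pred p <= M ^ p).
    { apply Rle_trans with (M ^ pred p).
      - apply pow_incr. split; [apply Cmod_ge_0 | unfold M; lra].
      - apply Rle_pow; [auto | lia]. }
    pose proof (pos_INR p).
    assert (H1 : Cmod (w + h) * E <= M * (INR p ^ 2 * M ^ p * Cmod h ^ 2))
      by (apply Rmult_le_compat; auto; apply Cmod_ge_0).
    assert (H2 : INR p * Cmod h * Cmod h * Cmod w ^ pred p <= INR p * Cmod h ^ 2 * M ^ p).
    { replace (INR p * Cmod h * Cmod h * Cmod w ^ pred p)
        with (INR p * Cmod h ^ 2 * Cmod w ^ pred p) by ring.
      apply Rmult_le_compat_l; auto. apply Rmult_le_pos; auto. apply pow_le; auto. }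
    rewrite S_INR. simpl pow. simpl pow in H1, H2.
    assert (0 <= INR p * Cmod h * Cmod h * M ^ p) by (repeat apply Rmult_le_pos; auto).
    assert (0 <= M * M ^ p * Cmod h * Cmod h) by (repeat apply Rmult_le_pos; auto; lra).
    nra.
Qed.

Lemma ex_CSeries_gseries (b : nat -> R) (e : nat -> nat) (w : C) :
  odd_bounded e -> fast_decay b -> ex_CSeries (fun k => RtoC (b k) * Cpow w (e k))%C.
Proof.
  intros e_le Hb. set (M := Cmod w + 1).
  assert (HM : 1 <= M) by (unfold M; pose proof (Cmod_ge_0 w); lra).
  apply ex_CSeries_le with (fun k => M * (Rabs (b k) * (M ^ 2) ^ k)).
  - intros k. rewrite Cmod_mult, Cmod_R, Cmod_pow.
    assert (Cmod w ^ e k <= M * (M ^ 2) ^ k).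
    { rewrite <- pow_double_S. apply Rle_trans with (M ^ e k).
      - apply pow_incr; split; [apply Cmod_ge_0 | unfold M; lra].
      - apply Rle_pow; auto. }
    pose proof (Rabs_pos (b k)).
    replace (M * (Rabs (b k) * (M ^ 2) ^ k)) with (Rabs (b k) * (M * (M ^ 2) ^ k)) by ring.
    apply Rmult_le_compat_l; auto.
  - apply ex_series_Rscal, Hb. apply pow_lt; lra.
Qed.

Lemma gseries_plus (b b' : nat -> R) (e : nat -> nat) (w : C) :
  odd_bounded e -> fast_decay b -> fast_decay b' ->
  (gseries b e w + gseries b' e w)%C = gseries (fun k => b k + b' k) e w.
Proof.
  intros He Hb Hb'. unfold gseries. rewrite <- CSeries_plus by (apply ex_CSeries_gseries; auto).
  apply CSeries_ext. intros k. rewrite RtoC_plus. ring.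
Qed.

Lemma gseries_scal (c : R) (b : nat -> R) (e : nat -> nat) (w : C) :
  odd_bounded e -> fast_decay b ->
  (RtoC c * gseries b e w)%C = gseries (fun k => c * b k) e w.
Proof.
  intros He Hb. unfold gseries. rewrite <- CSeries_scal by (apply ex_CSeries_gseries; auto).
  apply CSeries_ext. intros k. rewrite RtoC_mult. ring.
Qed.

Lemma fast_decay_deriv_coef (b : nat -> R) (e : nat -> nat) :
  odd_bounded e -> fast_decay b -> fast_decay (deriv_coef b e).
Proof.
  intros He Hb. apply fast_decay_le with (fun k => b k * INR (e k)) (/ 2).
  - intros k. unfold deriv_coef, Rdiv. rewrite Rabs_mult, (Rabs_pos_eq (/ 2)) by lra.
    pose proof (pow_R1_Rle 3 k ltac:(lra)). pose proof (Rabs_pos (b k * INR (e k))). nra.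
  - apply fast_decay_mulINR; auto.
Qed.

Lemma ex_series_gseries_taylor_majorant (b : nat -> R) (e : nat -> nat) (M : R) :
  odd_bounded e -> fast_decay b -> 1 <= M ->
  ex_series (fun k => Rabs (b k) * INR (e k) ^ 2 * M ^ e k).
Proof.
  intros e_le Hb HM.
  apply ex_series_le_R with (fun k => M * (Rabs (b k) * (9 * M ^ 2) ^ k)).
  - intros k. pose proof (Rabs_pos (b k)).
    assert (H1 : 0 <= INR (e k) ^ 2) by (apply pow_le, pos_INR).
    assert (H2 : 0 <= M ^ e k) by (apply pow_le; lra).
    rewrite Rabs_pos_eq by (apply Rmult_le_pos; [apply Rmult_le_pos |]; auto).
    assert (HMe : M ^ e k <= M * (M ^ 2) ^ k) by (rewrite <- pow_double_S; apply Rle_pow; auto).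
    assert (He9 : INR (e k) ^ 2 <= 9 ^ k).
    { replace 9 with (3 ^ 2) by ring. rewrite <- pow_mult, Nat.mul_comm, pow_mult.
      apply pow_incr. split; [apply pos_INR |].
      eapply Rle_trans; [apply le_INR, e_le | apply INR_double_S_le_pow3]. }
    rewrite Rpow_mult_distr.
    replace (M * (Rabs (b k) * (9 ^ k * (M ^ 2) ^ k)))
      with (Rabs (b k) * (9 ^ k * (M * (M ^ 2) ^ k))) by ring.
    rewrite Rmult_assoc. apply Rmult_le_compat_l; auto. apply Rmult_le_compat; auto.
  - apply ex_series_Rscal, Hb. assert (0 < M ^ 2) by (apply pow_lt; lra). lra.
Qed.

Lemma gseries_linear_approx_termwise (b : nat -> R) (e : nat -> nat) (w0 h : C) :
  odd_bounded e -> fast_decay b ->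
  (gseries b e (w0 + h) - gseries b e w0
   - h * gseries (fun k => Rmult (b k) (INR (e k))) (deriv_exp e) w0)%C
  = CSeries (fun k => RtoC (b k) * (Cpow (w0 + h) (e k) - Cpow w0 (e k)
                                    - RtoC (INR (e k)) * Cpow w0 (pred (e k)) * h))%C.
Proof.
  intros e_le Hb.
  assert (Hpred : odd_bounded (deriv_exp e)) by (apply odd_bounded_deriv_exp; auto).
  set (u1 := fun k => (RtoC (b k) * Cpow (w0 + h) (e k))%C).
  set (u2 := fun k => (RtoC (b k) * Cpow w0 (e k))%C).
  set (u3 := fun k => (RtoC (Rmult (b k) (INR (e k))) * Cpow w0 (deriv_exp e k))%C).
  assert (C1 : ex_CSeries u1) by (apply ex_CSeries_gseries; auto).
  assert (C2 : ex_CSeries u2) by (apply ex_CSeries_gseries; auto).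
  assert (C3 : ex_CSeries u3).
  { apply (ex_CSeries_gseries _ (deriv_exp e)); auto. apply fast_decay_mulINR; auto. }
  transitivity (CSeries (fun k => (u1 k + RtoC (Ropp 1) * u2 k) + (- h) * u3 k)%C).
  - rewrite !CSeries_plus, !CSeries_scal; auto.
    + unfold gseries; fold u1 u2 u3. rewrite RtoC_opp. ring.
    + apply ex_CSeries_scal; auto.
    + apply ex_CSeries_plus; auto; apply ex_CSeries_scal; auto.
    + apply ex_CSeries_scal; auto.
  - apply CSeries_ext. intros k. unfold u1, u2, u3, deriv_exp. rewrite RtoC_mult, RtoC_opp. ring.
Qed.

Lemma gseries_linear_approx_le (b : nat -> R) (e : nat -> nat) (w0 : C) :
  odd_bounded e -> fast_decay b ->
  exists K, 0 <= K /\ forall h, Cmod h <= 1 ->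
    Cmod (gseries b e (w0 + h) - gseries b e w0
          - h * gseries (fun k => Rmult (b k) (INR (e k))) (deriv_exp e) w0)%C
    <= K * Cmod h ^ 2.
Proof.
  intros e_le Hb. set (M := Cmod w0 + 1).
  assert (HM : 1 <= M) by (unfold M; pose proof (Cmod_ge_0 w0); lra).
  set (B := fun k => Rabs (b k) * INR (e k) ^ 2 * M ^ e k).
  assert (HB : ex_series B) by (apply ex_series_gseries_taylor_majorant; auto).
  assert (HB0 : forall k, 0 <= B k).
  { intros k. unfold B. pose proof (Rabs_pos (b k)).
    assert (0 <= INR (e k) ^ 2) by (apply pow_le, pos_INR).
    assert (0 <= M ^ e k) by (apply pow_le; lra).
    apply Rmult_le_pos; [apply Rmult_le_pos |]; auto. }
  exists (2 * Series B). split; [pose proof (Series_ge0 B HB0 HB); lra |].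
  intros h Hh. rewrite gseries_linear_approx_termwise by auto.
  replace (2 * Series B * Cmod h ^ 2) with (2 * Series (fun k => Cmod h ^ 2 * B k))
    by (rewrite Series_scal_l; ring).
  apply Cmod_CSeries_le; [| apply ex_series_Rscal; auto].
  intros k. rewrite Cmod_mult, Cmod_R. unfold B.
  pose proof (Cpow_linear_approx_le w0 h (e k) Hh). pose proof (Rabs_pos (b k)).
  replace (Cmod h ^ 2 * (Rabs (b k) * INR (e k) ^ 2 * M ^ e k))
    with (Rabs (b k) * (INR (e k) ^ 2 * M ^ e k * Cmod h ^ 2)) by ring.
  apply Rmult_le_compat_l; auto.
Qed.

(** * Directional derivatives *)

Definition dir_deriv (F : C -> C) (z0 d L : C) : Prop :=
  forall eps, 0 < eps -> exists del, 0 < del /\ forall t : R, t <> 0 -> Rabs t < del ->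
    Cmod ((F (z0 + RtoC t * d) - F z0) / (RtoC t * d) - L)%C < eps.

Lemma Cmod_RtoC_mult (t : R) (d : C) : Cmod (RtoC t * d)%C = Rabs t * Cmod d.
Proof. rewrite Cmod_mult, Cmod_R. reflexivity. Qed.

Lemma RtoC_mult_neq0 (t : R) (d : C) : t <> 0 -> d <> RtoC 0 -> (RtoC t * d)%C <> RtoC 0.
Proof.
  intros Ht Hd. apply Cmult_neq_0; auto. intros E. apply Ht. now injection E.
Qed.

Lemma dir_deriv_ext F G z0 d L L' : (forall z, F z = G z) -> L = L' ->
  dir_deriv F z0 d L -> dir_deriv G z0 d L'.
Proof.
  intros EFG <- H eps Heps. destruct (H eps Heps) as [del [Hdel Ht]].
  exists del; split; auto. intros t. rewrite <- !EFG. auto.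
Qed.

Lemma dir_deriv_of_linear_approx F z0 d L : d <> RtoC 0 ->
  (exists K r, 0 < r /\ 0 <= K /\ forall h, Cmod h <= r ->
     Cmod (F (z0 + h) - F z0 - h * L)%C <= K * Cmod h ^ 2) ->
  dir_deriv F z0 d L.
Proof.
  intros Hd [K [r [Hr [HK Hb]]]] eps Heps.
  pose proof (proj1 (Cmod_gt_0 d) Hd) as Hdp.
  exists (Rmin (r / Cmod d) (eps / ((K + 1) * Cmod d))). split.
  { apply Rmin_pos; apply Rdiv_lt_0_compat; auto; nra. }
  intros t Ht Hlt.
  assert (Hlt1 : Rabs t * Cmod d < r).
  { apply Rlt_le_trans with (r / Cmod d * Cmod d); [| right; field; lra].
    apply Rmult_lt_compat_r; auto. eapply Rlt_le_trans; [apply Hlt | apply Rmin_l]. }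
  assert (Hlt2 : Rabs t * Cmod d < eps / (K + 1)).
  { apply Rlt_le_trans with (eps / ((K + 1) * Cmod d) * Cmod d); [| right; field; lra].
    apply Rmult_lt_compat_r; auto. eapply Rlt_le_trans; [apply Hlt | apply Rmin_r]. }
  set (h := (RtoC t * d)%C).
  assert (Hh0 : h <> RtoC 0) by (apply RtoC_mult_neq0; auto).
  assert (Hmh : Cmod h = Rabs t * Cmod d) by apply Cmod_RtoC_mult.
  assert (Hhp : 0 < Cmod h) by (apply Cmod_gt_0; auto).
  replace ((F (z0 + h) - F z0) / h - L)%C with ((F (z0 + h) - F z0 - h * L) / h)%C
    by (field; auto).
  rewrite Cmod_div by auto.
  specialize (Hb h ltac:(lra)).
  apply Rle_lt_trans with (K * Cmod h).
  { apply Rmult_le_reg_r with (Cmod h); auto. unfold Rdiv.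
    rewrite Rmult_assoc, Rinv_l by lra. simpl in Hb. nra. }
  apply Rle_lt_trans with (K * (eps / (K + 1))); [apply Rmult_le_compat_l; lra |].
  apply Rmult_lt_reg_r with (K + 1); [lra |].
  replace (K * (eps / (K + 1)) * (K + 1)) with (K * eps) by (field; lra). nra.
Qed.

Lemma dir_deriv_const c z0 d : dir_deriv (fun _ => c) z0 d (RtoC 0).
Proof.
  intros eps Heps. exists 1. split; [lra |]. intros t _ _.
  replace ((c - c) / (RtoC t * d) - RtoC 0)%C with (RtoC 0) by (unfold Cdiv; ring).
  rewrite Cmod_0. auto.
Qed.

Lemma dir_deriv_plus F G z0 d LF LG : dir_deriv F z0 d LF -> dir_deriv G z0 d LG ->
  dir_deriv (fun z => F z + G z)%C z0 d (LF + LG)%C.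
Proof.
  intros HF HG eps Heps.
  destruct (HF (eps / 2)) as [d1 [Hd1 H1]]; [lra |].
  destruct (HG (eps / 2)) as [d2 [Hd2 H2]]; [lra |].
  exists (Rmin d1 d2). split; [apply Rmin_pos; auto |].
  intros t Ht Hlt.
  specialize (H1 t Ht (Rlt_le_trans _ _ _ Hlt (Rmin_l _ _))).
  specialize (H2 t Ht (Rlt_le_trans _ _ _ Hlt (Rmin_r _ _))).
  set (X := (RtoC t * d)%C) in *.
  replace ((F (z0 + X) + G (z0 + X) - (F z0 + G z0)) / X - (LF + LG))%C
    with (((F (z0 + X) - F z0) / X - LF) + ((G (z0 + X) - G z0) / X - LG))%C
    by (unfold Cdiv; ring).
  eapply Rle_lt_trans; [apply Cmod_triangle | lra].
Qed.

Lemma dir_deriv_increment_le G z0 d LG : d <> RtoC 0 -> dir_deriv G z0 d LG ->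
  exists del, 0 < del /\ forall t : R, t <> 0 -> Rabs t < del ->
    Cmod (G (z0 + RtoC t * d) - G z0)%C <= Rabs t * ((Cmod LG + 1) * Cmod d).
Proof.
  intros Hd HG. destruct (HG 1 Rlt_0_1) as [del [Hdel H]]. exists del. split; auto.
  intros t Ht Hlt. specialize (H t Ht Hlt).
  set (X := (RtoC t * d)%C) in *.
  assert (HX : X <> RtoC 0) by (apply RtoC_mult_neq0; auto).
  replace (G (z0 + X) - G z0)%C with (X * (((G (z0 + X) - G z0) / X - LG) + LG))%C
    by (field; auto).
  assert (HmX : Cmod X = Rabs t * Cmod d) by apply Cmod_RtoC_mult.
  rewrite Cmod_mult, HmX.
  pose proof (Cmod_triangle ((G (z0 + X) - G z0) / X - LG)%C LG).
  pose proof (Rabs_pos t). pose proof (Cmod_ge_0 d).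
  replace (Rabs t * ((Cmod LG + 1) * Cmod d)) with (Rabs t * Cmod d * (Cmod LG + 1)) by ring.
  apply Rmult_le_compat_l; [nra | lra].
Qed.

Lemma Cmod_product_rule_error_lt (qF LF qG LG F0 G0 G1 : C) (eta : R) :
  eta <= 1 -> Cmod (qF - LF) < eta -> Cmod (qG - LG) < eta -> Cmod (G1 - G0) <= eta ->
  Cmod ((qF - LF) * G1 + LF * (G1 - G0) + F0 * (qG - LG))%C
  < 3 * (Cmod G0 + Cmod F0 + Cmod LF + 1) * eta.
Proof.
  intros Heta HF HG HG1.
  pose proof (Cmod_ge_0 G0). pose proof (Cmod_ge_0 F0). pose proof (Cmod_ge_0 LF).
  pose proof (Cmod_ge_0 (qF - LF)). pose proof (Cmod_ge_0 (G1 - G0)).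
  assert (Cmod G1 <= Cmod G0 + 1).
  { replace G1 with ((G1 - G0) + G0)%C by ring. pose proof (Cmod_triangle (G1 - G0) G0). lra. }
  eapply Rle_lt_trans; [apply Cmod_triangle |].
  eapply Rle_lt_trans; [apply Rplus_le_compat_r; apply Cmod_triangle |].
  rewrite !Cmod_mult.
  assert (Cmod (qF - LF) * Cmod G1 < eta * (Cmod G0 + 1)) by (pose proof (Cmod_ge_0 G1); nra).
  assert (Cmod LF * Cmod (G1 - G0) <= Cmod LF * eta) by (apply Rmult_le_compat_l; lra).
  assert (Cmod F0 * Cmod (qG - LG) <= Cmod F0 * eta) by (apply Rmult_le_compat_l; lra).
  nra.
Qed.

Lemma dir_deriv_mult F G z0 d LF LG : d <> RtoC 0 ->
  dir_deriv F z0 d LF -> dir_deriv G z0 d LG ->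
  dir_deriv (fun z => F z * G z)%C z0 d (LF * G z0 + F z0 * LG)%C.
Proof.
  intros Hd HF HG eps Heps.
  set (M := Cmod (G z0) + Cmod (F z0) + Cmod LF + 1).
  assert (HM : 0 < M) by (unfold M; pose proof (Cmod_ge_0 (G z0));
    pose proof (Cmod_ge_0 (F z0)); pose proof (Cmod_ge_0 LF); lra).
  set (eta := Rmin 1 (eps / (3 * M))).
  assert (Heta : 0 < eta) by (apply Rmin_pos; [lra | apply Rdiv_lt_0_compat; lra]).
  assert (HetaM : 3 * M * eta <= eps).
  { apply Rle_trans with (3 * M * (eps / (3 * M))); [| right; field; lra].
    apply Rmult_le_compat_l; [lra | apply Rmin_r]. }
  set (c := (Cmod LG + 1) * Cmod d).
  assert (Hc : 0 <= c) by (unfold c; pose proof (Cmod_ge_0 LG); pose proof (Cmod_ge_0 d); nra).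
  destruct (HF eta Heta) as [d1 [Hd1 HqF]]. destruct (HG eta Heta) as [d2 [Hd2 HqG]].
  destruct (dir_deriv_increment_le G z0 d LG Hd HG) as [d3 [Hd3 HdG]]. fold c in HdG.
  set (d4 := eta / (c + 1)).
  exists (Rmin (Rmin d1 d2) (Rmin d3 d4)).
  split; [repeat apply Rmin_pos; auto; apply Rdiv_lt_0_compat; lra |]. intros t Ht Hlt.
  pose proof (Rmin_l d1 d2). pose proof (Rmin_r d1 d2). pose proof (Rmin_l d3 d4).
  pose proof (Rmin_r d3 d4). pose proof (Rmin_l (Rmin d1 d2) (Rmin d3 d4)).
  pose proof (Rmin_r (Rmin d1 d2) (Rmin d3 d4)).
  specialize (HqF t Ht ltac:(lra)). specialize (HqG t Ht ltac:(lra)).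
  specialize (HdG t Ht ltac:(lra)).
  assert (Hinc : Rabs t * c <= eta).
  { apply Rle_trans with (d4 * (c + 1)); [| unfold d4; right; field; lra].
    pose proof (Rabs_pos t). apply Rmult_le_compat; lra. }
  set (X := (RtoC t * d)%C) in *.
  assert (HX : X <> RtoC 0) by (apply RtoC_mult_neq0; auto).
  replace ((F (z0 + X) * G (z0 + X) - F z0 * G z0) / X - (LF * G z0 + F z0 * LG))%C
    with (((F (z0 + X) - F z0) / X - LF) * G (z0 + X) + LF * (G (z0 + X) - G z0)
          + F z0 * ((G (z0 + X) - G z0) / X - LG))%C by (field; auto).
  assert (eta <= 1) by apply Rmin_l.
  apply Rlt_le_trans with (3 * M * eta); [apply Cmod_product_rule_error_lt; lra | exact HetaM].
Qed.

Lemma dir_deriv_scal F z0 d c LF : d <> RtoC 0 -> dir_deriv F z0 d LF ->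
  dir_deriv (fun z => c * F z)%C z0 d (c * LF)%C.
Proof.
  intros Hd HF. apply dir_deriv_ext with (fun z => c * F z)%C (RtoC 0 * F z0 + c * LF)%C;
    [reflexivity | ring |].
  exact (dir_deriv_mult (fun _ => c) F z0 d (RtoC 0) LF Hd (dir_deriv_const c z0 d) HF).
Qed.

Lemma dir_deriv_opp F z0 d LF : d <> RtoC 0 -> dir_deriv F z0 d LF ->
  dir_deriv (fun z => - F z)%C z0 d (- LF)%C.
Proof.
  intros Hd HF. apply dir_deriv_ext with (fun z => RtoC (Ropp 1) * F z)%C (RtoC (Ropp 1) * LF)%C;
    [intros z | | apply dir_deriv_scal; auto]; rewrite RtoC_opp; ring.
Qed.

Lemma dir_deriv_inv z0 d : d <> RtoC 0 -> z0 <> RtoC 0 ->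
  dir_deriv Cinv z0 d (- (Cinv z0 * Cinv z0))%C.
Proof.
  intros Hd Hz. pose proof (proj1 (Cmod_gt_0 z0) Hz) as Hzp.
  apply dir_deriv_of_linear_approx; auto.
  exists (2 / Cmod z0 ^ 3), (Cmod z0 / 2). repeat split; [lra | |].
  { apply Rlt_le, Rdiv_lt_0_compat; [lra | apply pow_lt; auto]. }
  intros h Hh.
  assert (Hzh : Cmod z0 / 2 <= Cmod (z0 + h)%C).
  { pose proof (Cmod_triangle (z0 + h)%C (- h)%C). rewrite Cmod_opp in H.
    replace (z0 + h + - h)%C with z0 in H by ring. lra. }
  assert (Hzh0 : (z0 + h)%C <> RtoC 0) by (intros E; rewrite E, Cmod_0 in Hzh; lra).
  replace (Cinv (z0 + h) - Cinv z0 - h * - (Cinv z0 * Cinv z0))%C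
    with (h * h / (z0 * z0 * (z0 + h)))%C by (field; auto).
  rewrite Cmod_div, !Cmod_mult by (repeat apply Cmult_neq_0; auto).
  pose proof (Cmod_ge_0 h).
  apply Rmult_le_reg_r with (Cmod z0 * Cmod z0 * Cmod (z0 + h)%C);
    [apply Rmult_lt_0_compat; [apply Rmult_lt_0_compat |]; lra |].
  replace (Cmod h * Cmod h / (Cmod z0 * Cmod z0 * Cmod (z0 + h)%C)
           * (Cmod z0 * Cmod z0 * Cmod (z0 + h)%C)) with (Cmod h ^ 2) by (field; lra).
  replace (2 / Cmod z0 ^ 3 * Cmod h ^ 2 * (Cmod z0 * Cmod z0 * Cmod (z0 + h)%C))
    with (Cmod h ^ 2 * (2 * Cmod (z0 + h)%C / Cmod z0)) by (field; lra).
  rewrite <- (Rmult_1_r (Cmod h ^ 2)) at 1.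
  apply Rmult_le_compat_l; [nra |].
  apply Rmult_le_reg_r with (Cmod z0); auto.
  replace (2 * Cmod (z0 + h)%C / Cmod z0 * Cmod z0) with (2 * Cmod (z0 + h)%C) by (field; lra).
  lra.
Qed.

Lemma dir_deriv_of_components F z0 d (phi1 phi2 : R -> R) l1 l2 r :
  d <> RtoC 0 -> 0 < r ->
  (forall t, Rabs t < r -> F (z0 + RtoC t * d)%C = (phi1 t, phi2 t)) ->
  derivable_pt_lim phi1 0 l1 -> derivable_pt_lim phi2 0 l2 ->
  dir_deriv F z0 d ((l1, l2) / d)%C.
Proof.
  intros Hd Hr HF D1 D2 eps Heps.
  pose proof (proj1 (Cmod_gt_0 d) Hd) as Hdp.
  assert (He2 : 0 < eps * Cmod d / 2) by (apply Rdiv_lt_0_compat; nra).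
  destruct (D1 _ He2) as [d1 H1]. destruct (D2 _ He2) as [d2 H2].
  exists (Rmin r (Rmin d1 d2)). split; [apply Rmin_pos; auto; apply Rmin_pos; apply cond_pos |].
  intros t Ht Hlt.
  pose proof (Rmin_l r (Rmin d1 d2)). pose proof (Rmin_r r (Rmin d1 d2)).
  pose proof (Rmin_l d1 d2). pose proof (Rmin_r d1 d2).
  specialize (H1 t Ht ltac:(lra)). specialize (H2 t Ht ltac:(lra)).
  rewrite Rplus_0_l in H1, H2.
  assert (E0 : F z0 = (phi1 0, phi2 0)).
  { rewrite <- (HF 0) by (rewrite Rabs_R0; auto). f_equal. ring. }
  rewrite (HF t ltac:(lra)), E0.
  set (q1 := (phi1 t - phi1 0) / t) in *. set (q2 := (phi2 t - phi2 0) / t) in *.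
  replace (((phi1 t, phi2 t) - (phi1 0, phi2 0)) / (RtoC t * d) - (l1, l2) / d)%C
    with ((Rminus q1 l1, Rminus q2 l2) / d)%C.
  2: { assert (Ht' : RtoC t <> RtoC 0) by (intros E; apply Ht; now injection E).
       replace (phi1 t, phi2 t) with ((phi1 0, phi2 0) + RtoC t * (q1, q2))%C
         by (unfold q1, q2, Cplus, Cmult, RtoC; simpl; f_equal; field; auto).
       replace (Rminus q1 l1, Rminus q2 l2) with ((q1, q2) - (l1, l2))%C
         by (unfold Cminus, Cplus, Copp; simpl; f_equal; ring).
       field. auto. }
  rewrite Cmod_div by auto.
  apply Rmult_lt_reg_r with (Cmod d); auto.
  replace ((Cmod (Rminus q1 l1, Rminus q2 l2)) / Cmod d * Cmod d)
    with (Cmod (Rminus q1 l1, Rminus q2 l2)) by (field; lra).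
  eapply Rle_lt_trans; [apply Cmod_le_abs_Re_Im |]. simpl. lra.
Qed.

Lemma C_derive_of_dir_deriv (F : C -> C) (z0 L : C) :
  dir_deriv F z0 (RtoC 1) L -> C_derive F z0 = L.
Proof.
  intros HF. destruct z0 as [x0 y0].
  assert (Hcomp : forall comp : C -> R, (forall u, Rabs (comp u) <= Cmod u) ->
            (forall a b, comp (a - b)%C = comp a - comp b) ->
            is_lim (fun x => comp ((F (x, y0) - F (x0, y0)) / ((x, y0) - (x0, y0)))%C) x0 (comp L)).
  { intros comp Hle Hminus. apply is_lim_spec. intros eps.
    destruct (HF eps (cond_pos eps)) as [del [Hdel Hq]].
    exists (mkposreal del Hdel). intros x Hx Hneq. change R in x.
    change (Rabs (x - x0) < del) in Hx.
    assert (Ht : x - x0 <> 0) by lra.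
    specialize (Hq (x - x0) Ht Hx).
    replace ((x0, y0) + RtoC (x - x0) * RtoC 1)%C with (x, y0) in Hq
      by (unfold Cplus, Cmult, RtoC; simpl; f_equal; ring).
    replace (RtoC (x - x0) * RtoC 1)%C with ((x, y0) - (x0, y0))%C in Hq
      by (unfold Cminus, Cplus, Copp, Cmult, RtoC; simpl; f_equal; ring).
    rewrite <- Hminus. eapply Rle_lt_trans; [apply Hle | exact Hq]. }
  unfold C_derive, C_lim. cbn [fst snd].
  rewrite (is_lim_unique _ _ _ (Hcomp fst re_le_Cmod (fun a b => eq_refl))).
  rewrite (is_lim_unique _ _ _ (Hcomp snd Im_le_Cmod (fun a b => eq_refl))).
  destruct L. reflexivity.
Qed.

Lemma derivable_pt_lim_of_dir_deriv_Ci (G : C -> C) (x y : R) (L : C) :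
  dir_deriv G (x, y) Ci L ->
  derivable_pt_lim (fun s => Re (G (x, s))) y (Re (Ci * L)) /\
  derivable_pt_lim (fun s => Im (G (x, s))) y (Im (Ci * L)).
Proof.
  intros HG.
  assert (Hcomp : forall comp : C -> R, (forall u, Rabs (comp u) <= Cmod u) ->
            (forall a b, comp (a - b)%C = comp a - comp b) ->
            (forall u h, h <> 0 -> comp (u / RtoC h)%C = comp u / h) ->
            derivable_pt_lim (fun s => comp (G (x, s))) y (comp (Ci * L)%C)).
  { intros comp Hle Hminus Hdiv eps Heps. destruct (HG eps Heps) as [del [Hdel Hq]].
    exists (mkposreal del Hdel). intros h Hh Hhd. specialize (Hq h Hh Hhd).
    replace ((x, y) + RtoC h * Ci)%C with (x, Rplus y h) in Hq
      by (unfold Cplus, Cmult, RtoC, Ci; simpl; f_equal; ring).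
    replace ((comp (G (x, Rplus y h)) - comp (G (x, y))) / h - comp (Ci * L)%C)
      with (comp ((G (x, Rplus y h) - G (x, y)) / RtoC h - Ci * L)%C)
      by (rewrite Hminus, Hdiv, Hminus by auto; reflexivity).
    eapply Rle_lt_trans; [apply Hle |].
    replace ((G (x, Rplus y h) - G (x, y)) / RtoC h - Ci * L)%C
      with (Ci * ((G (x, Rplus y h) - G (x, y)) / (RtoC h * Ci) - L))%C.
    - rewrite Cmod_mult, Cmod_Ci, Rmult_1_l. exact Hq.
    - field. split; [intros E; apply Hh; now injection E | intros E; injection E; lra]. }
  split; apply Hcomp; auto using re_le_Cmod, Im_le_Cmod;
    intros [a b] h Hh; unfold Cdiv, Cinv, Cmult, RtoC; simpl; field; auto.
Qed.

Lemma Cdiv_2 (z : C) : (z / RtoC 2)%C = (RtoC (/ 2) * z)%C.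
Proof. destruct z as [x y]. unfold Cdiv, Cinv, Cmult, RtoC; simpl. f_equal; field. Qed.

Lemma dir_deriv_gseries_half (b : nat -> R) (e : nat -> nat) z0 d :
  d <> RtoC 0 -> odd_bounded e -> fast_decay b ->
  dir_deriv (fun z => gseries b e (z / RtoC 2)) z0 d
    (gseries (deriv_coef b e) (deriv_exp e) (z0 / RtoC 2)).
Proof.
  intros Hd He Hb. apply dir_deriv_of_linear_approx; auto.
  destruct (gseries_linear_approx_le b e (z0 / RtoC 2) He Hb) as [K [HK HB]].
  exists K, 1. repeat split; auto; [lra |].
  intros h Hh.
  assert (Hh2 : Cmod (RtoC (/ 2) * h)%C <= 1).
  { rewrite Cmod_mult, Cmod_R, Rabs_pos_eq by lra. pose proof (Cmod_ge_0 h). lra. }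
  specialize (HB _ Hh2).
  replace ((z0 + h) / RtoC 2)%C with (z0 / RtoC 2 + RtoC (/ 2) * h)%C by (rewrite !Cdiv_2; ring).
  replace (gseries (deriv_coef b e) (deriv_exp e) (z0 / RtoC 2))
    with (RtoC (/ 2) * gseries (fun k => Rmult (b k) (INR (e k))) (deriv_exp e) (z0 / RtoC 2))%C.
  2: { rewrite gseries_scal; [apply gseries_ext; intros k; unfold deriv_coef; field | |].
       - apply (odd_bounded_deriv_exp e He).
       - apply fast_decay_mulINR; auto. }
  set (G' := gseries (fun k => Rmult (b k) (INR (e k))) (deriv_exp e) (z0 / RtoC 2)) in *.
  replace (h * (RtoC (/ 2) * G'))%C with (RtoC (/ 2) * h * G')%C by ring.
  eapply Rle_trans; [apply HB |].
  rewrite Cmod_mult, Cmod_R, Rabs_pos_eq by lra.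
  pose proof (Cmod_ge_0 h). apply Rmult_le_compat_l; auto. simpl. nra.
Qed.

Lemma Carg_upper_half_plane (x y : R) : 0 < y -> Carg (x, y) = PI / 2 - atan (x / y).
Proof.
  intros Hy. unfold Carg, Re, Im; simpl.
  destruct (Rlt_dec 0 x) as [Hx | Hx].
  - replace (y / x) with (/ (x / y)) by (field; lra). apply atan_inv, Rdiv_lt_0_compat; lra.
  - destruct (Rlt_dec x 0) as [Hx' | Hx'].
    + destruct (Rle_dec 0 y) as [_ | N]; [| lra].
      replace (y / x) with (- / (- x / y)) by (field; lra).
      rewrite atan_opp, atan_inv by (apply Rdiv_lt_0_compat; lra).
      replace (- x / y) with (- (x / y)) by (field; lra). rewrite atan_opp. lra.
    + replace x with 0 by lra. destruct (Rlt_dec 0 y) as [_ | N]; [| lra].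
      unfold Rdiv. rewrite Rmult_0_l, atan_0. ring.
Qed.

Lemma plus_mult_pos_of_small (y d t : R) : 0 < y -> Rabs t < y / (Rabs d + 1) -> 0 < y + t * d.
Proof.
  intros Hy Ht. pose proof (Rabs_pos d). pose proof (Rabs_pos t).
  assert (Rabs t * (Rabs d + 1) < y).
  { apply Rlt_le_trans with (y / (Rabs d + 1) * (Rabs d + 1)); [apply Rmult_lt_compat_r; lra |].
    right; field; lra. }
  assert (Rabs (t * d) <= Rabs t * (Rabs d + 1)) by (rewrite Rabs_mult; nra).
  pose proof (Rle_abs (- (t * d))) as Hneg. rewrite Rabs_Ropp in Hneg. lra.
Qed.

Lemma Clog_half_upper_half_plane (x y : R) : 0 < y ->
  Clog ((x, y) / RtoC 2)%C = (ln (sqrt ((x / 2) ^ 2 + (y / 2) ^ 2)), PI / 2 - atan (x / y)).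
Proof.
  intros Hy. rewrite Cdiv_2.
  replace (RtoC (/ 2) * (x, y))%C with (x / 2, y / 2)
    by (unfold Cmult, RtoC; simpl; f_equal; field).
  unfold Clog, Cmod; simpl. rewrite Carg_upper_half_plane by lra.
  f_equal. f_equal. f_equal. field. lra.
Qed.

Lemma dir_deriv_Clog_half (z0 d : C) : 0 < Im z0 -> d <> RtoC 0 ->
  dir_deriv (fun z => Clog (z / RtoC 2)) z0 d (Cinv z0).
Proof.
  destruct z0 as [x0 y0], d as [d1 d2]. unfold Im; simpl. intros Hy Hd.
  assert (Hn : x0 ^ 2 + y0 ^ 2 <> 0) by nra.
  assert (Hd' : d1 ^ 2 + d2 ^ 2 <> 0).
  { intros E. apply Hd. assert (d1 = 0) by nra. assert (d2 = 0) by nra. subst. reflexivity. }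
  apply dir_deriv_ext with (fun z => Clog (z / RtoC 2))
    (((x0 * d1 + y0 * d2) / (x0 ^ 2 + y0 ^ 2), (x0 * d2 - y0 * d1) / (x0 ^ 2 + y0 ^ 2))%R
     / (d1, d2))%C; [reflexivity | |].
  { unfold Cdiv, Cinv, Cmult; simpl.
    f_equal; field; split; [contradict Hn | contradict Hd' | contradict Hn | contradict Hd']; nra. }
  apply (dir_deriv_of_components _ _ _
    (fun t => ln (sqrt (((x0 + t * d1) / 2) ^ 2 + ((y0 + t * d2) / 2) ^ 2)))
    (fun t => PI / 2 - atan ((x0 + t * d1) / (y0 + t * d2))) _ _ (y0 / (Rabs d2 + 1)));
    auto; [apply Rdiv_lt_0_compat; pose proof (Rabs_pos d2); lra | | |].
  - intros t Ht. pose proof (plus_mult_pos_of_small y0 d2 t Hy Ht).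
    replace ((x0, y0) + RtoC t * (d1, d2))%C with (x0 + t * d1, y0 + t * d2)
      by (unfold Cplus, Cmult, RtoC; simpl; f_equal; ring).
    apply Clog_half_upper_half_plane; auto.
  - apply is_derive_Reals. auto_derive.
    + split; [nra |]. split; auto. apply sqrt_lt_R0. nra.
    + rewrite !Rmult_0_l, !Rplus_0_r.
      remember (sqrt _) as s eqn:Hs.
      assert (Hss : s * s = (x0 ^ 2 + y0 ^ 2) / 4) by (rewrite Hs, sqrt_sqrt; [field | nra]).
      assert (Hs0 : s <> 0) by (intros E; rewrite E in Hss; nra).
      match goal with |- ?N * / (2 * s) * / s = _ =>
        replace (N * / (2 * s) * / s) with (N / (2 * (s * s))) by (field; auto) end.
      rewrite Hss. field. auto.
  - apply is_derive_Reals. auto_derive; [lra |].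
    rewrite !Rmult_0_l, !Rplus_0_r. field. split; [lra |]. nra.
Qed.

Definition bessel_exp (k : nat) : nat := (2 * k + 1)%nat.

Definition bseries (b : nat -> R) (z : C) : C := gseries b bessel_exp (z / RtoC 2).

Definition bseries_d1 (b : nat -> R) (z : C) : C :=
  gseries (deriv_coef b bessel_exp) (deriv_exp bessel_exp) (z / RtoC 2).

Definition bseries_d2 (b : nat -> R) (z : C) : C :=
  gseries (deriv_coef (deriv_coef b bessel_exp) (deriv_exp bessel_exp))
    (deriv_exp (deriv_exp bessel_exp)) (z / RtoC 2).

Lemma odd_bounded_bessel_exp : odd_bounded bessel_exp.
Proof. intros k. unfold bessel_exp. lia. Qed.

Lemma dir_deriv_bseries (b : nat -> R) z0 d : d <> RtoC 0 -> fast_decay b ->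
  dir_deriv (bseries b) z0 d (bseries_d1 b z0).
Proof. intros Hd Hb. apply dir_deriv_gseries_half; auto using odd_bounded_bessel_exp. Qed.

Lemma dir_deriv_bseries_d1 (b : nat -> R) z0 d : d <> RtoC 0 -> fast_decay b ->
  dir_deriv (bseries_d1 b) z0 d (bseries_d2 b z0).
Proof.
  intros Hd Hb. pose proof odd_bounded_bessel_exp.
  apply dir_deriv_gseries_half; auto using odd_bounded_deriv_exp, fast_decay_deriv_coef.
Qed.

Lemma gseries_mul_deriv_exp (b : nat -> R) (w : C) : fast_decay b ->
  (w * gseries b (deriv_exp bessel_exp) w)%C = gseries b bessel_exp w.
Proof.
  intros Hb. unfold gseries.
  rewrite <- CSeries_scal
    by (apply ex_CSeries_gseries; auto using odd_bounded_deriv_exp, odd_bounded_bessel_exp).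
  apply CSeries_ext. intros k. unfold deriv_exp, bessel_exp.
  replace (2 * k + 1)%nat with (S (2 * k)) by lia. rewrite Nat.pred_succ, Cpow_S. ring.
Qed.

Lemma gseries_mul2_deriv_exp2 (b : nat -> R) (w : C) : fast_decay b -> b O = 0 ->
  (w * w * gseries b (deriv_exp (deriv_exp bessel_exp)) w)%C = gseries b bessel_exp w.
Proof.
  intros Hb Hb0. pose proof odd_bounded_bessel_exp. unfold gseries.
  rewrite <- CSeries_scal by (apply ex_CSeries_gseries; auto using odd_bounded_deriv_exp).
  apply CSeries_ext. intros [|k]; [rewrite Hb0; simpl; ring |].
  unfold deriv_exp, bessel_exp.
  replace (2 * S k + 1)%nat with (S (S (2 * k + 1))) by lia.
  rewrite !Nat.pred_succ, !Cpow_S. ring.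
Qed.

Lemma gseries_mul2_shiftR (b : nat -> R) (w : C) : fast_decay b ->
  (w * w * gseries b bessel_exp w)%C = gseries (shiftR b) bessel_exp w.
Proof.
  intros Hb. unfold gseries.
  rewrite <- CSeries_scal by (apply ex_CSeries_gseries; auto using odd_bounded_bessel_exp).
  rewrite (CSeries_incr_1_aux (fun k => RtoC (shiftR b k) * Cpow w (bessel_exp k))%C)
    by (simpl; ring).
  apply CSeries_ext. intros k. unfold bessel_exp. simpl shiftR.
  replace (2 * S k + 1)%nat with (S (S (2 * k + 1))) by lia. rewrite !Cpow_S. ring.
Qed.

Lemma bessel_operator_bseries (b : nat -> R) (z : C) : fast_decay b ->
  (z * z * bseries_d2 b z + z * bseries_d1 b z + (z * z - RtoC 1) * bseries b z)%C
  = bseries (fun k => 4 * (INR k * (INR k + 1) * b k + shiftR b k)) z.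
Proof.
  intros Hb. pose proof odd_bounded_bessel_exp as He.
  assert (Hb1 : fast_decay (deriv_coef b bessel_exp)) by (apply fast_decay_deriv_coef; auto).
  assert (Hb2 : fast_decay (deriv_coef (deriv_coef b bessel_exp) (deriv_exp bessel_exp)))
    by (apply fast_decay_deriv_coef; auto using odd_bounded_deriv_exp).
  unfold bseries, bseries_d1, bseries_d2. set (w := (z / RtoC 2)%C).
  replace z with (RtoC 2 * w)%C by (unfold w; rewrite Cdiv_2, Cmult_assoc, <- RtoC_mult;
    replace (2 * / 2) with 1 by field; ring).
  set (b1 := deriv_coef b bessel_exp) in *.
  set (b2 := deriv_coef b1 (deriv_exp bessel_exp)) in *.
  transitivity (RtoC 4 * (w * w * gseries b2 (deriv_exp (deriv_exp bessel_exp)) w)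
    + RtoC 2 * (w * gseries b1 (deriv_exp bessel_exp) w)
    + RtoC 4 * (w * w * gseries b bessel_exp w) + RtoC (Ropp 1) * gseries b bessel_exp w)%C.
  { rewrite RtoC_opp. ring. }
  rewrite gseries_mul2_deriv_exp2, gseries_mul_deriv_exp, gseries_mul2_shiftR by
    (auto; unfold b2, deriv_coef, deriv_exp, bessel_exp; simpl; field).
  rewrite !gseries_scal, !gseries_plus;
    auto using fast_decay_scal, fast_decay_plus, fast_decay_shiftR.
  apply gseries_ext. intros k. unfold b2, b1, deriv_coef, deriv_exp, bessel_exp.
  replace (pred (2 * k + 1)) with (2 * k)%nat by lia. rewrite plus_INR, !mult_INR. simpl. field.
Qed.

Definition bessel_coef (k : nat) : R := (-1) ^ k / (INR (fact k) * INR (fact (S k))).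

Definition digamma_sum (k : nat) : R := digamma_nat k + digamma_nat (S k).

Definition neumann_coef (k : nat) : R := digamma_sum k * bessel_coef k.

Definition delta0 (k : nat) : R := match k with O => 1 | S _ => 0 end.

Lemma INR_fact_pos (k : nat) : 0 < INR (fact k).
Proof. apply lt_0_INR, lt_O_fact. Qed.

Lemma fast_decay_bessel_coef : fast_decay bessel_coef.
Proof.
  intros M HM. apply ex_series_le_R with (fun k => M ^ k / INR (fact k)).
  2: { exists (exp M). apply (is_series_ext (fun k => scal (pow_n M k) (/ INR (fact k)))).
       - intros k. rewrite pow_n_pow. reflexivity.
       - apply is_exp_Reals. }
  intros k. pose proof (INR_fact_pos k). pose proof (INR_fact_pos (S k)).
  assert (HMk : 0 < M ^ k) by (apply pow_lt; auto).
  assert (Hf1 : 1 <= INR (fact (S k))) by (apply (le_INR 1), lt_O_fact).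
  unfold bessel_coef, Rdiv.
  rewrite Rabs_mult, Rabs_Rabsolu, (Rabs_pos_eq (M ^ k)), Rabs_mult, pow_1_abs, Rmult_1_l,
    Rabs_pos_eq, Rinv_mult by (try apply Rlt_le, Rinv_0_lt_compat; nra).
  rewrite (Rmult_comm (M ^ k)). apply Rmult_le_compat_r; [lra |].
  rewrite <- (Rmult_1_r (/ INR (fact k))) at 2.
  apply Rmult_le_compat_l; [apply Rlt_le, Rinv_0_lt_compat; lra |].
  rewrite <- Rinv_1. apply Rinv_le_contravar; lra.
Qed.

Lemma harmonic_S (n : nat) : harmonic (S n) = harmonic n + / INR (S n).
Proof. destruct n; [simpl; field | reflexivity]. Qed.

Lemma harmonic_bounds (n : nat) : 0 <= harmonic n <= INR n.
Proof.
  induction n as [|n IH]; [simpl; lra |].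
  rewrite harmonic_S, S_INR. pose proof (pos_INR n).
  assert (0 < / (INR n + 1)) by (apply Rinv_0_lt_compat; lra).
  assert (/ (INR n + 1) <= 1) by (rewrite <- Rinv_1; apply Rinv_le_contravar; lra).
  lra.
Qed.

Lemma fast_decay_neumann_coef : fast_decay neumann_coef.
Proof.
  apply fast_decay_le with bessel_coef (2 * Rabs euler_gamma + 1); [| apply fast_decay_bessel_coef].
  intros k. unfold neumann_coef, digamma_sum, digamma_nat. rewrite Rabs_mult.
  pose proof (harmonic_bounds k). pose proof (harmonic_bounds (S k)).
  pose proof (INR_double_S_le_pow3 k). rewrite plus_INR, mult_INR in H1. rewrite S_INR in H0.
  simpl INR in H1. pose proof (Rabs_pos (bessel_coef k)). pose proof (pow_R1_Rle 3 k ltac:(lra)).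
  pose proof (Rle_abs euler_gamma). pose proof (Rle_abs (- euler_gamma)). rewrite Rabs_Ropp in H5.
  apply Rmult_le_compat_r; auto. apply Rabs_le. split; nra.
Qed.

Lemma fast_decay_delta0 : fast_decay delta0.
Proof.
  apply fast_decay_le with bessel_coef 1; [| apply fast_decay_bessel_coef].
  intros [|k].
  - unfold delta0, bessel_coef. simpl. replace (1 / (1 * 1)) with 1 by field.
    rewrite Rabs_R1. lra.
  - unfold delta0. rewrite Rabs_R0. apply Rmult_le_pos; [| apply Rabs_pos].
    pose proof (pow_le 3 (S k)). lra.
Qed.

Lemma bessel_coef_S (k : nat) :
  bessel_coef (S k) = - bessel_coef k / ((INR k + 1) * (INR k + 2)).
Proof.
  unfold bessel_coef. rewrite !fact_simpl, !mult_INR, !S_INR.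
  pose proof (INR_fact_pos k). pose proof (pos_INR k). simpl pow. field. repeat split; lra.
Qed.

Lemma digamma_sum_S (k : nat) : digamma_sum (S k) = digamma_sum k + / (INR k + 1) + / (INR k + 2).
Proof.
  unfold digamma_sum, digamma_nat. rewrite (harmonic_S (S k)), (harmonic_S k), !S_INR.
  replace (INR k + 1 + 1) with (INR k + 2) by ring. ring.
Qed.

Lemma bessel_coef_rec (k : nat) :
  INR k * (INR k + 1) * bessel_coef k + shiftR bessel_coef k = 0.
Proof.
  destruct k as [|k]; [simpl; ring |].
  simpl shiftR. rewrite bessel_coef_S, S_INR. pose proof (pos_INR k). field. lra.
Qed.

Lemma neumann_coef_rec (k : nat) :
  INR k * (INR k + 1) * neumann_coef k + shiftR neumann_coef k
  = bessel_coef k * INR (bessel_exp k) - delta0 k.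
Proof.
  unfold neumann_coef, bessel_exp. destruct k as [|k].
  - unfold bessel_coef. simpl. field.
  - simpl shiftR. simpl delta0. rewrite digamma_sum_S, bessel_coef_S, plus_INR, mult_INR, !S_INR.
    pose proof (pos_INR k). simpl INR. field. lra.
Qed.

Lemma gseries_delta0 (w : C) : gseries delta0 bessel_exp w = w.
Proof.
  unfold gseries.
  rewrite CSeries_incr_1 by (apply ex_CSeries_gseries; auto using odd_bounded_bessel_exp, fast_decay_delta0).
  rewrite CSeries_0 by (intros k; simpl; ring).
  simpl. ring.
Qed.

Lemma bessel_ode_bessel_coef (z : C) :
  (z * z * bseries_d2 bessel_coef z + z * bseries_d1 bessel_coef z
   + (z * z - RtoC 1) * bseries bessel_coef z)%C = RtoC 0.
Proof.
  rewrite bessel_operator_bseries by apply fast_decay_bessel_coef.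
  apply gseries_0. intros k. rewrite bessel_coef_rec. ring.
Qed.

Lemma bessel_ode_neumann_coef (z : C) :
  (z * z * bseries_d2 neumann_coef z + z * bseries_d1 neumann_coef z
   + (z * z - RtoC 1) * bseries neumann_coef z)%C
  = (RtoC 4 * (z * bseries_d1 bessel_coef z) - RtoC 2 * z)%C.
Proof.
  pose proof odd_bounded_bessel_exp as He. pose proof fast_decay_bessel_coef as Hb.
  assert (Hb1 : fast_decay (deriv_coef bessel_coef bessel_exp)) by (apply fast_decay_deriv_coef; auto).
  rewrite bessel_operator_bseries by apply fast_decay_neumann_coef.
  unfold bseries, bseries_d1. set (w := (z / RtoC 2)%C).
  replace z with (RtoC 2 * w)%C by (unfold w; rewrite Cdiv_2, Cmult_assoc, <- RtoC_mult;
    replace (2 * / 2) with 1 by field; ring).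
  transitivity
    (RtoC 4 * (RtoC 2 * (w * gseries (deriv_coef bessel_coef bessel_exp) (deriv_exp bessel_exp) w))
     + RtoC (Ropp 1) * (RtoC 2 * (RtoC 2 * gseries delta0 bessel_exp w)))%C.
  2: { rewrite gseries_delta0, RtoC_opp. ring. }
  rewrite gseries_mul_deriv_exp by auto.
  rewrite !gseries_scal, gseries_plus; auto using fast_decay_scal, fast_decay_delta0.
  apply gseries_ext. intros k. rewrite neumann_coef_rec. unfold deriv_coef. field.
Qed.

(** * The Hankel function and Bessel's equation *)

Definition log_half (z : C) : C := Clog (z / RtoC 2).

Definition hankel1_d1 (z : C) : C :=
  (bseries_d1 bessel_coef z
   + Ci * (RtoC (2 / PI) * (Cinv z * Cinv z)
           + RtoC (2 / PI) * (Cinv z * bseries bessel_coef z + log_half z * bseries_d1 bessel_coef z)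
           + - (RtoC (/ PI) * bseries_d1 neumann_coef z)))%C.

Definition hankel1_d2 (z : C) : C :=
  (bseries_d2 bessel_coef z
   + Ci * (RtoC (2 / PI) * (RtoC (Ropp 2) * (Cinv z * Cinv z * Cinv z))
           + RtoC (2 / PI) * (- (Cinv z * Cinv z) * bseries bessel_coef z
                              + Cinv z * bseries_d1 bessel_coef z + Cinv z * bseries_d1 bessel_coef z
                              + log_half z * bseries_d2 bessel_coef z)
           + - (RtoC (/ PI) * bseries_d2 neumann_coef z)))%C.

Lemma RtoC_PI_neq0 : RtoC PI <> RtoC 0.
Proof. intros E. injection E. apply PI_neq0. Qed.

Lemma hankel1_bseries (z : C) : hankel1 z =
  (bseries bessel_coef z
   + Ci * (- (RtoC (2 / PI) * Cinv z) + RtoC (2 / PI) * log_half z * bseries bessel_coef z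
           + - (RtoC (/ PI) * bseries neumann_coef z)))%C.
Proof.
  unfold hankel1, besselY1.
  replace (Cdiv (RtoC 2) (Cmult (RtoC PI) z)) with (RtoC (2 / PI) * Cinv z)%C.
  2: { destruct (Ceq_dec z (RtoC 0)) as [E | E].
       - subst z. rewrite Cmult_0_r. unfold Cdiv. rewrite Cinv_0. ring.
       - rewrite RtoC_div by apply PI_neq0. field. split; auto. apply RtoC_PI_neq0. }
  do 5 f_equal. apply CSeries_ext. intros k. unfold bessel1_term, neumann_coef, digamma_sum.
  rewrite RtoC_mult. fold (bessel_coef k). unfold bessel_exp. ring.
Qed.

Section HankelDerivatives.

Variables z0 d : C.
Hypothesis d_neq0 : d <> RtoC 0.
Hypothesis z0_neq0 : z0 <> RtoC 0.
Hypothesis dir_deriv_log_half : dir_deriv log_half z0 d (Cinv z0).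

Let dJ := dir_deriv_bseries bessel_coef z0 d d_neq0 fast_decay_bessel_coef.
Let dJ1 := dir_deriv_bseries_d1 bessel_coef z0 d d_neq0 fast_decay_bessel_coef.
Let dS := dir_deriv_bseries neumann_coef z0 d d_neq0 fast_decay_neumann_coef.
Let dS1 := dir_deriv_bseries_d1 neumann_coef z0 d d_neq0 fast_decay_neumann_coef.
Let dinv := dir_deriv_inv z0 d d_neq0 z0_neq0.
Hint Resolve dJ dJ1 dS dS1 dinv dir_deriv_log_half : core.

Lemma dir_deriv_hankel1 : dir_deriv hankel1 z0 d (hankel1_d1 z0).
Proof.
  eapply dir_deriv_ext; [intros z; symmetry; apply hankel1_bseries | |].
  2: { apply dir_deriv_plus; [exact dJ |]. apply dir_deriv_scal; auto.
       repeat apply dir_deriv_plus.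
       - apply dir_deriv_opp, dir_deriv_scal; auto.
       - apply dir_deriv_mult; auto. apply dir_deriv_scal; auto.
       - apply dir_deriv_opp, dir_deriv_scal; auto. }
  unfold hankel1_d1. ring.
Qed.

Lemma dir_deriv_hankel1_d1 : dir_deriv hankel1_d1 z0 d (hankel1_d2 z0).
Proof.
  eapply dir_deriv_ext; [reflexivity | |].
  2: { apply dir_deriv_plus; [exact dJ1 |]. apply dir_deriv_scal; auto.
       repeat apply dir_deriv_plus.
       - apply dir_deriv_scal, dir_deriv_mult; auto.
       - apply dir_deriv_scal; auto. apply dir_deriv_plus; apply dir_deriv_mult; auto.
       - apply dir_deriv_opp, dir_deriv_scal; auto. }
  unfold hankel1_d2. rewrite RtoC_opp. ring.
Qed.

End HankelDerivatives.

Lemma hankel1_ode (z : C) : z <> RtoC 0 ->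
  (z * z * hankel1_d2 z + z * hankel1_d1 z + (z * z - RtoC 1) * hankel1 z)%C = RtoC 0.
Proof.
  intros Hz. pose proof (bessel_ode_bessel_coef z) as HJ. pose proof (bessel_ode_neumann_coef z) as HS.
  rewrite hankel1_bseries. unfold hankel1_d1, hankel1_d2 in *.
  set (J := bseries bessel_coef z) in *. set (J1 := bseries_d1 bessel_coef z) in *.
  set (J2 := bseries_d2 bessel_coef z) in *. set (S := bseries neumann_coef z) in *.
  set (S1 := bseries_d1 neumann_coef z) in *. set (S2 := bseries_d2 neumann_coef z) in *.
  set (L := log_half z).
  transitivity ((RtoC 1 + Ci * RtoC (2 / PI) * L)
                  * (z * z * J2 + z * J1 + (z * z - RtoC 1) * J)
                - Ci * RtoC (/ PI) * ((z * z * S2 + z * S1 + (z * z - RtoC 1) * S)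
                                       - (RtoC 4 * (z * J1) - RtoC 2 * z)))%C.
  - rewrite RtoC_div, RtoC_inv, RtoC_opp by apply PI_neq0.
    field. split; auto. apply RtoC_PI_neq0.
  - rewrite HJ, HS. ring.
Qed.

(** * A real system of Bessel type *)

Lemma deriv_nonneg_le (g g' : R -> R) (s u : R) : s <= u ->
  (forall c, s <= c <= u -> derivable_pt_lim g c (g' c)) ->
  (forall c, s <= c <= u -> 0 <= g' c) -> g s <= g u.
Proof.
  intros [Hlt | ->] Hd Hn; [| lra].
  destruct (MVT_cor2 g g' s u Hlt Hd) as [c [Hc1 Hc2]].
  assert (0 <= g' c) by (apply Hn; lra). nra.
Qed.

Lemma deriv_nonpos_le (g g' : R -> R) (s u : R) : s <= u ->
  (forall c, s <= c <= u -> derivable_pt_lim g c (g' c)) ->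
  (forall c, s <= c <= u -> g' c <= 0) -> g u <= g s.
Proof.
  intros Hsu Hd Hn.
  enough (- g s <= - g u) by lra.
  apply (deriv_nonneg_le (fun t => - g t) (fun t => - g' t)); auto.
  - intros c Hc. apply derivable_pt_lim_opp, Hd; auto.
  - intros c Hc. specialize (Hn c Hc). lra.
Qed.

Lemma Rinv_le_1 (t : R) : 1 <= t -> / t <= 1.
Proof. intros Ht. rewrite <- Rinv_1. apply Rinv_le_contravar; lra. Qed.

Lemma deriv_locally_const (g : R -> R) (y r l : R) : 0 < r ->
  (forall t, Rabs (t - y) < r -> g t = g y) -> derivable_pt_lim g y l -> l = 0.
Proof.
  intros Hr Hc Hd. apply is_derive_Reals in Hd.
  assert (Hconst : is_derive (fun _ => g y) y l).
  { apply (is_derive_ext_loc g); auto. exists (mkposreal r Hr). intros t Ht. apply Hc, Ht. }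
  rewrite <- (is_derive_unique _ _ _ Hconst). apply Derive_const.
Qed.

Lemma nonvanishing_sign_const (g : R -> R) (a : R) :
  (forall y, a <= y -> continuity_pt g y) -> (forall y, a <= y -> g y <> 0) ->
  (forall y, a <= y -> 0 < g y) \/ (forall y, a <= y -> g y < 0).
Proof.
  intros Hcont Hnz.
  assert (Hcross : forall y, a < y -> ~ (g a < 0 < g y \/ g y < 0 < g a)).
  { intros y Hy [[Ha Hy'] | [Hy' Ha]].
    - destruct (IVT_interv g a y) as [z [Hz1 Hz2]]; auto; [intros c Hc; apply Hcont; lra |].
      apply (Hnz z); lra.
    - destruct (IVT_interv (fun t => - g t) a y) as [z [Hz1 Hz2]]; try lra.
      + intros c Hc. apply continuity_pt_opp, Hcont. lra.
      + apply (Hnz z); lra. }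
  pose proof (Hnz a (Rle_refl a)).
  destruct (Rlt_dec 0 (g a)) as [Hpos | Hneg]; [left | right]; intros y Hy;
    destruct (Req_dec a y) as [<- | Hay]; try lra;
    specialize (Hnz y Hy); specialize (Hcross y ltac:(lra)); lra.
Qed.

Section BesselSystem.

Variables f p : R -> R.
Hypothesis f_deriv : forall y, 0 < y -> derivable_pt_lim f y (p y / y).
Hypothesis p_deriv : forall y, 0 < y -> derivable_pt_lim p y ((y + / y) * f y).

Section PositiveSolution.

Variable a : R.
Hypothesis a_ge1 : 1 <= a.
Hypothesis f_pos : forall y, a <= y -> 0 < f y.

Lemma weighted_sum_nonincreasing (s u : R) : a <= s -> s <= u ->
  (p u + 3 * u * f u) * exp (-3 * u) <= (p s + 3 * s * f s) * exp (-3 * s).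
Proof.
  intros Hs Hsu.
  apply (deriv_nonpos_le (fun t => (p t + 3 * t * f t) * exp (-3 * t))
           (fun t => (t + / t + 3 - 9 * t) * f t * exp (-3 * t))); auto.
  - intros c Hc.
    eapply eq_rect; [apply derivable_pt_lim_mult;
      [apply derivable_pt_lim_plus; [apply p_deriv | apply derivable_pt_lim_mult;
         [apply derivable_pt_lim_scal, derivable_pt_lim_id | apply f_deriv]] |] |]; try lra.
    { apply is_derive_Reals. auto_derive; auto. }
    cbv beta. field. lra.
  - intros c Hc. pose proof (f_pos c ltac:(lra)). pose proof (exp_pos (-3 * c)).
    pose proof (Rinv_le_1 c ltac:(lra)).
    assert (0 < f c * exp (-3 * c)) by (apply Rmult_lt_0_compat; auto). nra.
Qed.

Lemma weighted_difference_nonincreasing (s u : R) : a <= s -> s <= u ->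
  (p u - 2 * u * f u) * exp (2 * u) <= (p s - 2 * s * f s) * exp (2 * s).
Proof.
  intros Hs Hsu.
  apply (deriv_nonpos_le (fun t => (p t - 2 * t * f t) * exp (2 * t))
           (fun t => (/ t - 3 * t - 2) * f t * exp (2 * t))); auto.
  - intros c Hc.
    eapply eq_rect; [apply derivable_pt_lim_mult;
      [apply derivable_pt_lim_minus; [apply p_deriv | apply derivable_pt_lim_mult;
         [apply derivable_pt_lim_scal, derivable_pt_lim_id | apply f_deriv]] |] |]; try lra.
    { apply is_derive_Reals. auto_derive; auto. }
    cbv beta. field. lra.
  - intros c Hc. pose proof (f_pos c ltac:(lra)). pose proof (exp_pos (2 * c)).
    pose proof (Rinv_le_1 c ltac:(lra)).
    assert (0 < f c * exp (2 * c)) by (apply Rmult_lt_0_compat; auto). nra.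
Qed.

(* If [p + 3 t f < 0] at [t], the weighted sum keeps [p] below a negative multiple of the
   variable after [t], so [f' = p / t] drives [f] below [0]. *)
Lemma positive_solution_lower_bound (t : R) : a <= t -> - (3 * t * f t) <= p t.
Proof.
  intros Ht0.
  destruct (Rle_lt_dec 0 (p t + 3 * t * f t)) as [Hq | Hq]; [lra | exfalso].
  set (del := - ((p t + 3 * t * f t) * exp (-3 * t))).
  assert (Hdel : 0 < del) by (unfold del; pose proof (exp_pos (-3 * t)); nra).
  assert (Hps : forall s, t <= s -> p s <= - 3 * del * s).
  { intros s Hs. pose proof (weighted_sum_nonincreasing t s Ht0 Hs) as HQ.
    assert (Ee : exp (-3 * s) * exp (3 * s) = 1)
      by (rewrite <- exp_plus; replace (-3 * s + 3 * s) with 0 by ring; apply exp_0).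
    assert (p s + 3 * s * f s <= - del * exp (3 * s)).
    { replace (p s + 3 * s * f s) with ((p s + 3 * s * f s) * exp (-3 * s) * exp (3 * s))
        by (rewrite Rmult_assoc, Ee; ring).
      apply Rmult_le_compat_r; [pose proof (exp_pos (3 * s)) | unfold del]; lra. }
    assert (3 * s < exp (3 * s)) by (pose proof (exp_ineq1 (3 * s) ltac:(lra)); lra).
    pose proof (f_pos s ltac:(lra)). nra. }
  set (t1 := t + f t / (3 * del) + 1).
  assert (Hft : 0 < f t) by (apply f_pos; lra).
  assert (Ht1 : t < t1)
    by (unfold t1; assert (0 < f t / (3 * del)) by (apply Rdiv_lt_0_compat; lra); lra).
  destruct (MVT_cor2 f (fun y => p y / y) t t1 Ht1) as [c [Hc1 Hc2]].
  { intros c Hc. apply f_deriv. lra. }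
  assert (p c / c <= - 3 * del).
  { specialize (Hps c ltac:(lra)). apply Rmult_le_reg_r with c; [lra |].
    unfold Rdiv. rewrite Rmult_assoc, Rinv_l, Rmult_1_r by lra. lra. }
  assert (3 * del * (t1 - t) = f t + 3 * del) by (unfold t1; field; lra).
  pose proof (f_pos t1 ltac:(lra)). nra.
Qed.

(* While [E := p - 2 t f] stays positive on [[a, t]], [f] increases there and the weighted
   difference gives [E t <= E a]. *)
Lemma positive_solution_upper_bound : exists K, 0 < K /\ forall t, a <= t -> p t <= K * t * f t.
Proof.
  set (E := fun t => p t - 2 * t * f t).
  set (K := 2 + Rabs (E a) / f a).
  assert (Hfa : 0 < f a) by (apply f_pos; lra).
  assert (HK : 2 <= K)
    by (unfold K; assert (0 <= Rabs (E a) / f a) by (apply Rdiv_le_0_compat; [apply Rabs_pos | lra]); lra).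
  exists K. split; [lra |]. intros t Ht. assert (Hft : 0 < f t) by (apply f_pos; lra).
  assert (Htf : 0 <= t * f t) by (apply Rmult_le_pos; lra).
  destruct (Rle_lt_dec (E t) 0) as [HE | HE].
  { unfold E in HE. assert (0 <= (K - 2) * (t * f t)) by (apply Rmult_le_pos; lra). nra. }
  assert (HEs : forall s, a <= s <= t -> 0 < E s).
  { intros s Hs. pose proof (weighted_difference_nonincreasing s t ltac:(lra) ltac:(lra)).
    pose proof (exp_pos (2 * t)). pose proof (exp_pos (2 * s)).
    destruct (Rle_lt_dec (E s) 0); auto. unfold E in *. nra. }
  assert (Hfat : f a <= f t).
  { apply (deriv_nonneg_le f (fun y => p y / y)); auto.
    - intros c Hc. apply f_deriv. lra.
    - intros c Hc. specialize (HEs c Hc). unfold E in HEs. pose proof (f_pos c ltac:(lra)).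
      apply Rdiv_le_0_compat; [nra | lra]. }
  assert (HEa : E t <= E a).
  { pose proof (weighted_difference_nonincreasing a t ltac:(lra) Ht). pose proof (HEs a ltac:(lra)).
    pose proof (exp_pos (2 * t)).
    assert (exp (2 * a) <= exp (2 * t))
      by (destruct (Req_dec a t); [subst; lra | left; apply exp_increasing; lra]).
    unfold E in *. nra. }
  assert (E a <= Rabs (E a) / f a * (t * f t)).
  { pose proof (HEs a ltac:(lra)). rewrite Rabs_pos_eq by lra.
    apply Rle_trans with (E a / f a * f a); [right; field; lra |].
    apply Rmult_le_compat_l; [apply Rdiv_le_0_compat; lra | nra]. }
  unfold K, E in *. nra.
Qed.

Lemma positive_solution_bound :
  exists C, 0 < C /\ forall t, a <= t -> Rabs (p t) <= C * t * f t.
Proof.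
  destruct positive_solution_upper_bound as [K [HK Up]].
  exists (Rmax K 3). split; [apply Rlt_le_trans with 3; [lra | apply Rmax_r] |].
  intros t Ht. pose proof (positive_solution_lower_bound t Ht). specialize (Up t Ht).
  assert (0 < t * f t) by (apply Rmult_lt_0_compat; [lra | apply f_pos; lra]).
  pose proof (Rmax_l K 3). pose proof (Rmax_r K 3).
  apply Rabs_le. split; nra.
Qed.

End PositiveSolution.

Lemma solution_eventually_zero :
  (forall a, 1 <= a -> exists y, a <= y /\ f y = 0) ->
  exists Y, 1 <= Y /\ forall y, Y <= y -> f y = 0 /\ p y = 0.
Proof.
  intros Hz. destruct (Hz 1 (Rle_refl 1)) as [y1 [Hy1 Hfy1]].
  set (g := fun t => f t * p t).
  set (g' := fun t => p t / t * p t + f t * ((t + / t) * f t)).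
  assert (Hg : forall t, 0 < t -> derivable_pt_lim g t (g' t))
    by (intros t Ht; apply derivable_pt_lim_mult; auto).
  assert (Hsq : forall t, 0 < t -> 0 <= p t / t * p t /\ 0 <= f t * ((t + / t) * f t)).
  { intros t Ht. pose proof (Rinv_0_lt_compat t Ht). unfold Rdiv. split; nra. }
  (* [g = f p] is nondecreasing and vanishes at [y1] and at arbitrarily large points,
     so it is constant beyond [y1] and [g' = 0] there. *)
  assert (Zf : forall y, y1 < y -> f y = 0).
  { intros y Hy. destruct (Hz (y + 1) ltac:(lra)) as [y2 [Hy2 Hfy2]].
    assert (Hg0 : forall s, y1 <= s <= y2 -> g s = 0).
    { intros s Hs.
      assert (g y1 <= g s /\ g s <= g y2) as [H1 H2]; [split |].
      1, 2: apply (deriv_nonneg_le g g'); try lra;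
        intros c Hc; [apply Hg | pose proof (Hsq c ltac:(lra)); unfold g'] ; lra.
      unfold g in *. rewrite Hfy1 in H1. rewrite Hfy2 in H2. lra. }
    assert (Hgy : g' y = 0).
    { apply (deriv_locally_const g y (Rmin (y - y1) (y2 - y))); [apply Rmin_pos; lra | | apply Hg; lra].
      intros t Ht. pose proof (Rmin_l (y - y1) (y2 - y)). pose proof (Rmin_r (y - y1) (y2 - y)).
      apply Rabs_def2 in Ht. rewrite !Hg0; lra. }
    destruct (Hsq y ltac:(lra)) as [H1 H2]. unfold g' in Hgy.
    assert (Hf2 : f y * ((y + / y) * f y) = 0) by lra.
    assert (0 < y + / y) by (pose proof (Rinv_0_lt_compat y ltac:(lra)); lra).
    destruct (Rmult_integral _ _ Hf2) as [E | E]; auto.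
    destruct (Rmult_integral _ _ E); auto; lra. }
  exists (y1 + 1). split; [lra |]. intros y Hy. split; [apply Zf; lra |].
  assert (Hpy : p y / y = 0).
  { apply (deriv_locally_const f y (y - y1)); [lra | | apply f_deriv; lra].
    intros t Ht. apply Rabs_def2 in Ht. rewrite !Zf; lra. }
  apply Rmult_eq_reg_r with (/ y); [rewrite Rmult_0_l; exact Hpy | apply Rinv_neq_0_compat; lra].
Qed.

End BesselSystem.

Lemma bessel_system_tail_bound (f p : R -> R) :
  (forall y, 0 < y -> derivable_pt_lim f y (p y / y)) ->
  (forall y, 0 < y -> derivable_pt_lim p y ((y + / y) * f y)) ->
  exists Y C, 1 <= Y /\ 0 < C /\ forall y, Y <= y -> Rabs (p y) <= C * y * Rabs (f y).
Proof.
  intros Hf Hp.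
  destruct (classic (exists a, 1 <= a /\ forall y, a <= y -> f y <> 0)) as [[a [Ha Hnz]] | Hno].
  - assert (Hcont : forall y, a <= y -> continuity_pt f y).
    { intros y Hy. apply (derivable_continuous_pt f y (exist _ _ (Hf y ltac:(lra)))). }
    exists a. destruct (nonvanishing_sign_const f a Hcont Hnz) as [Hpos | Hneg].
    + destruct (positive_solution_bound f p Hf Hp a Ha Hpos) as [C [HC HB]].
      exists C. repeat split; auto. intros y Hy.
      rewrite (Rabs_pos_eq (f y)) by (left; apply Hpos; auto). auto.
    + destruct (positive_solution_bound (fun t => - f t) (fun t => - p t)) with a as [C [HC HB]]; auto.
      * intros y Hy. eapply eq_rect; [apply derivable_pt_lim_opp, Hf; auto |].
        field. lra.
      * intros y Hy. eapply eq_rect; [apply derivable_pt_lim_opp, Hp; auto |]. ring.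
      * intros y Hy. specialize (Hneg y Hy). lra.
      * exists C. repeat split; auto. intros y Hy. specialize (HB y Hy).
        rewrite Rabs_Ropp in HB. rewrite (Rabs_left (f y)) by (apply Hneg; auto). auto.
  - destruct (solution_eventually_zero f p Hf Hp) as [Y [HY HZ]].
    { intros a Ha. apply NNPP. intros N. apply Hno. exists a. split; auto.
      intros y Hy Hfy. apply N. exists y; auto. }
    exists Y, 1. repeat split; [auto | lra |]. intros y Hy.
    destruct (HZ y Hy) as [-> ->]. rewrite !Rabs_R0. lra.
Qed.

(** * The symbol on the imaginary axis *)

Section BesselImaginaryAxis.

Variables F F1 F2 : C -> C.
Hypothesis F_deriv : forall y, 0 < y -> dir_deriv F (0, y) Ci (F1 (0, y)).
Hypothesis F1_deriv : forall y, 0 < y -> dir_deriv F1 (0, y) Ci (F2 (0, y)).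
Hypothesis F_ode : forall y, 0 < y ->
  let z := (0, y) in (z * z * F2 z + z * F1 z + (z * z - RtoC 1) * F z)%C = RtoC 0.

Lemma imag_axis_ode_components (y : R) : 0 < y ->
  - (y * y) * Re (F2 (0, y)) - y * Im (F1 (0, y)) - (y * y + 1) * Re (F (0, y)) = 0 /\
  - (y * y) * Im (F2 (0, y)) + y * Re (F1 (0, y)) - (y * y + 1) * Im (F (0, y)) = 0.
Proof.
  intros Hy. pose proof (F_ode y Hy) as E. simpl in E.
  destruct (F2 (0, y)) as [b1 b2], (F1 (0, y)) as [a1 a2], (F (0, y)) as [h1 h2].
  unfold Cmult, Cplus, Cminus, Copp, RtoC in E. simpl in E. injection E as E1 E2.
  unfold Re, Im; simpl. split; nra.
Qed.

Lemma imag_axis_re_system :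
  (forall y, 0 < y -> derivable_pt_lim (fun s => Re (F (0, s))) y
                        (- (y * Im (F1 (0, y))) / y)) /\
  (forall y, 0 < y -> derivable_pt_lim (fun s => - (s * Im (F1 (0, s)))) y
                        ((y + / y) * Re (F (0, y)))).
Proof.
  split; intros y Hy.
  - eapply eq_rect; [apply (derivable_pt_lim_of_dir_deriv_Ci F 0 y _ (F_deriv y Hy)) |].
    destruct (F1 (0, y)) as [a1 a2]. unfold Ci, Cmult, Re, Im; simpl. field. lra.
  - destruct (derivable_pt_lim_of_dir_deriv_Ci F1 0 y _ (F1_deriv y Hy)) as [_ D2].
    eapply eq_rect;
      [apply derivable_pt_lim_opp, derivable_pt_lim_mult; [apply derivable_pt_lim_id | apply D2] |].
    destruct (imag_axis_ode_components y Hy) as [O1 _].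
    destruct (F2 (0, y)) as [b1 b2]. unfold Ci, Cmult, Re, Im in *; simpl in *.
    apply Rmult_eq_reg_r with y; [| lra]. field_simplify; [nra | lra].
Qed.

Lemma imag_axis_im_system :
  (forall y, 0 < y -> derivable_pt_lim (fun s => Im (F (0, s))) y
                        (y * Re (F1 (0, y)) / y)) /\
  (forall y, 0 < y -> derivable_pt_lim (fun s => s * Re (F1 (0, s))) y
                        ((y + / y) * Im (F (0, y)))).
Proof.
  split; intros y Hy.
  - eapply eq_rect; [apply (derivable_pt_lim_of_dir_deriv_Ci F 0 y _ (F_deriv y Hy)) |].
    destruct (F1 (0, y)) as [a1 a2]. unfold Ci, Cmult, Re, Im; simpl. field. lra.
  - destruct (derivable_pt_lim_of_dir_deriv_Ci F1 0 y _ (F1_deriv y Hy)) as [D1 _].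
    eapply eq_rect;
      [apply derivable_pt_lim_mult; [apply derivable_pt_lim_id | apply D1] |].
    destruct (imag_axis_ode_components y Hy) as [_ O2].
    destruct (F2 (0, y)) as [b1 b2]. unfold Ci, Cmult, Re, Im in *; simpl in *.
    apply Rmult_eq_reg_r with y; [| lra]. field_simplify; [nra | lra].
Qed.

Lemma bessel_solution_imag_axis_bound : exists Y C, 1 <= Y /\ 0 < C /\
  forall y, Y <= y -> Cmod ((0, y) * F1 (0, y))%C <= C * y * Cmod (F (0, y)).
Proof.
  destruct imag_axis_re_system as [HfR HpR]. destruct imag_axis_im_system as [HfI HpI].
  destruct (bessel_system_tail_bound (fun s => Re (F (0, s))) (fun s => - (s * Im (F1 (0, s))))
              HfR HpR) as [Y1 [C1 [HY1 [HC1 B1]]]].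
  destruct (bessel_system_tail_bound (fun s => Im (F (0, s))) (fun s => s * Re (F1 (0, s)))
              HfI HpI) as [Y2 [C2 [HY2 [HC2 B2]]]].
  exists (Rmax Y1 Y2), (C1 + C2). split; [eapply Rle_trans; [apply HY1 | apply Rmax_l] |].
  split; [lra |]. intros y Hy.
  pose proof (Rmax_l Y1 Y2). pose proof (Rmax_r Y1 Y2).
  specialize (B1 y ltac:(lra)). specialize (B2 y ltac:(lra)). simpl in B1, B2.
  eapply Rle_trans; [apply Cmod_le_abs_Re_Im |].
  pose proof (re_le_Cmod (F (0, y))). pose proof (Im_le_Cmod (F (0, y))).
  replace (Re ((0, y) * F1 (0, y))%C) with (- (y * Im (F1 (0, y))))
    by (destruct (F1 (0, y)); unfold Cmult, Re, Im; simpl; ring).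
  replace (Im ((0, y) * F1 (0, y))%C) with (y * Re (F1 (0, y)))
    by (destruct (F1 (0, y)); unfold Cmult, Re, Im; simpl; ring).
  assert (0 <= C1 * y) by nra. assert (0 <= C2 * y) by nra. nra.
Qed.

End BesselImaginaryAxis.

Lemma hfun_imag_axis_bound :
  exists Y C, 1 <= Y /\ 0 < C /\ forall y, Y <= y -> Cmod (hfun (0, y)) <= C * y.
Proof.
  assert (Hlog : forall y d, 0 < y -> d <> RtoC 0 -> dir_deriv log_half (0, y) d (Cinv (0, y)))
    by (intros y d Hy Hd; apply dir_deriv_Clog_half; auto).
  assert (Hnz : forall y, 0 < y -> (0, y) <> RtoC 0) by (intros y Hy E; injection E; lra).
  assert (HCi : Ci <> RtoC 0) by (intros E; injection E; lra).
  assert (H1 : RtoC 1 <> RtoC 0) by (intros E; injection E; lra).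
  destruct (bessel_solution_imag_axis_bound hankel1 hankel1_d1 hankel1_d2) as [Y [C [HY [HC HB]]]].
  - intros y Hy. apply dir_deriv_hankel1; auto.
  - intros y Hy. apply dir_deriv_hankel1_d1; auto.
  - intros y Hy. apply hankel1_ode; auto.
  - exists Y, C. repeat split; auto. intros y Hy. specialize (HB y Hy).
    unfold hfun. rewrite (C_derive_of_dir_deriv _ _ _ (dir_deriv_hankel1 _ _ H1 (Hnz y ltac:(lra))
      (Hlog y _ ltac:(lra) H1))).
    destruct (Ceq_dec (hankel1 (0, y)) (RtoC 0)) as [E | E].
    + rewrite E. unfold Cdiv. rewrite Cinv_0, Cmult_0_r, Cmod_0. nra.
    + rewrite Cmod_div by auto. pose proof (proj1 (Cmod_gt_0 _) E).
      apply Rmult_le_reg_r with (Cmod (hankel1 (0, y))); auto.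
      replace (Cmod ((0, y) * hankel1_d1 (0, y)) / Cmod (hankel1 (0, y)) * Cmod (hankel1 (0, y)))
        with (Cmod ((0, y) * hankel1_d1 (0, y))) by (field; lra).
      exact HB.
Qed.

Lemma kmode_evanescent (k Z : R) (m : nat) : 0 < Z -> 0 < k -> k < INR m * PI / Z ->
  exists s, kmode k Z m = (0, s) /\ INR m * PI / Z - k <= s <= INR m * PI / Z.
Proof.
  intros HZ Hk Hm. set (a := INR m * PI / Z) in *.
  exists (sqrt (INR m ^ 2 * PI ^ 2 / Z ^ 2 - k ^ 2)). split.
  - unfold kmode. fold a. destruct (Rlt_dec a k) as [N | _]; [lra |].
    unfold Cmult, Ci, RtoC; simpl. f_equal; ring.
  - replace (INR m ^ 2 * PI ^ 2 / Z ^ 2 - k ^ 2) with (a * a - k * k) by (unfold a; field; lra).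
    split.
    + rewrite <- (sqrt_square (a - k)) by lra. apply sqrt_le_1_alt. nra.
    + apply Rle_trans with (sqrt (a * a)); [apply sqrt_le_1_alt; nra | rewrite sqrt_square; lra].
Qed.

Lemma sum_f_R0_term_le (g : nat -> R) (N j : nat) :
  (forall i, 0 <= g i) -> (j <= N)%nat -> g j <= sum_f_R0 g N.
Proof.
  intros Hg. induction N as [|N IH]; intros Hj.
  - replace j with O by lia. simpl. lra.
  - simpl. destruct (Nat.eq_dec j (S N)) as [-> | E].
    + pose proof (cond_pos_sum g N Hg). lra.
    + specialize (IH ltac:(lia)). specialize (Hg (S N)). lra.
Qed.

Lemma hfun_kmode_linear_bound (Z Rad k : R) : 0 < Z -> 0 < Rad -> 0 < k ->
  exists K, 0 < K /\ forall m, (1 <= m)%nat ->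
    Cmod (hfun (Cmult (kmode k Z m) (RtoC Rad))) <= K * INR m.
Proof.
  intros HZ HR Hk. pose proof PI_RGT_0.
  destruct hfun_imag_axis_bound as [Y [C [HY [HC HB]]]].
  destruct (INR_unbounded (Z / PI * (k + Y / Rad))) as [M0 HM0].
  set (g := fun j => Cmod (hfun (Cmult (kmode k Z j) (RtoC Rad)))).
  assert (Hg0 : forall i, 0 <= g i) by (intros; apply Cmod_ge_0).
  set (B := sum_f_R0 g M0).
  assert (HB0 : 0 <= B) by (apply cond_pos_sum; auto).
  assert (HCR : 0 < C * Rad * PI / Z)
    by (apply Rdiv_lt_0_compat; [apply Rmult_lt_0_compat; [apply Rmult_lt_0_compat |] |]; lra).
  exists (B + C * Rad * PI / Z + 1). split; [lra |].
  intros m Hm. assert (Hm1 : 1 <= INR m) by (apply (le_INR 1); auto).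
  destruct (Nat.le_gt_cases m M0) as [Hle | Hlt].
  - pose proof (sum_f_R0_term_le g M0 m Hg0 Hle). fold B in H0. fold (g m). nra.
  - assert (Hmode : k + Y / Rad < INR m * PI / Z).
    { apply Rlt_le_trans with (INR M0 * PI / Z).
      - apply Rmult_lt_reg_r with (Z / PI); [apply Rdiv_lt_0_compat; lra |].
        replace (INR M0 * PI / Z * (Z / PI)) with (INR M0) by (field; lra). lra.
      - apply Rmult_le_compat_r; [apply Rlt_le, Rinv_0_lt_compat; lra |].
        apply Rmult_le_compat_r; [lra | apply le_INR; lia]. }
    assert (HYR : 0 < Y / Rad) by (apply Rdiv_lt_0_compat; lra).
    destruct (kmode_evanescent k Z m HZ Hk ltac:(lra)) as [s [Hks [Hs1 Hs2]]].
    assert (HyY : Y <= s * Rad).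
    { apply Rle_trans with (Y / Rad * Rad); [right; field; lra |].
      apply Rmult_le_compat_r; lra. }
    rewrite Hks. replace ((0, s) * RtoC Rad)%C with (0, s * Rad)
      by (unfold Cmult, RtoC; simpl; f_equal; ring).
    eapply Rle_trans; [apply HB; exact HyY |].
    assert (C * (s * Rad) <= C * Rad * PI / Z * INR m).
    { replace (C * Rad * PI / Z * INR m) with (C * Rad * (INR m * PI / Z)) by (field; lra).
      assert (0 < C * Rad) by nra. nra. }
    nra.
Qed.

Lemma linear_multiplier_bound (c : nat -> C) (K : R) (v : nat -> C) :
  0 < K -> (forall m, (1 <= m)%nat -> Cmod (c m) <= K * INR m) -> in_H12 v ->
  in_Hm12 (fun m => c m * v m)%C /\ Hm12_norm (fun m => c m * v m)%C <= K * H12_norm v.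
Proof.
  intros HK Hc Hv.
  assert (Hterm : forall n, 0 <= Hm12_terms (fun m => c m * v m)%C n <= K ^ 2 * H12_terms v n).
  { intros n. unfold Hm12_terms, H12_terms. rewrite Cmod_mult.
    assert (HSn : 0 < INR (S n)) by (apply lt_0_INR; lia).
    specialize (Hc (S n) ltac:(lia)).
    pose proof (Cmod_ge_0 (c (S n))). pose proof (Cmod_ge_0 (v (S n))).
    split; [apply Rdiv_le_0_compat; [apply pow2_ge_0 | lra] |].
    apply Rmult_le_reg_r with (INR (S n)); auto.
    replace ((Cmod (c (S n)) * Cmod (v (S n))) ^ 2 / INR (S n) * INR (S n))
      with (Cmod (c (S n)) ^ 2 * Cmod (v (S n)) ^ 2) by (field; lra).
    assert (Cmod (c (S n)) ^ 2 <= (K * INR (S n)) ^ 2) by (apply pow_incr; lra).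
    assert (0 <= Cmod (v (S n)) ^ 2) by apply pow2_ge_0.
    apply Rle_trans with ((K * INR (S n)) ^ 2 * Cmod (v (S n)) ^ 2); [nra |].
    right. ring. }
  assert (Hex : ex_series (fun n => K ^ 2 * H12_terms v n)) by (apply ex_series_Rscal, Hv).
  assert (Hm : in_Hm12 (fun m => c m * v m)%C).
  { apply ex_series_le_R with (fun n => K ^ 2 * H12_terms v n); auto.
    intros n. rewrite Rabs_pos_eq; apply Hterm. }
  split; auto. unfold Hm12_norm, H12_norm.
  assert (Hle : Series (Hm12_terms (fun m => c m * v m)%C) <= K ^ 2 * Series (H12_terms v))
    by (rewrite <- Series_scal_l; apply Series_le; auto).
  eapply Rle_trans; [apply sqrt_le_1_alt, Hle |].
  rewrite sqrt_mult_alt, sqrt_pow2 by (apply pow2_ge_0 || lra). lra.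
Qed.

(* [hres] is not used: the finitely many modes with [k_m R] not far out on the imaginary axis
   are bounded by their sum, whatever their values (at a resonance [k_m = 0], and [hfun 0] is
   the junk value [0]). *)
Theorem lemma3p3 (Z Rad k : R) (hZ : 0 < Z) (hR : 0 < Rad) (hk : 0 < k)
  (hres : forall m : nat, (1 <= m)%nat -> k <> INR m * PI / Z) :
  exists Cst : R, 0 < Cst /\
    forall v : nat -> C, in_H12 v ->
      in_Hm12 (Top k Rad Z v) /\ Hm12_norm (Top k Rad Z v) <= Cst * H12_norm v.
Proof.
  destruct (hfun_kmode_linear_bound Z Rad k hZ hR hk) as [K [HK Hbound]].
  exists K. split; auto. intros v Hv.
  exact (linear_multiplier_bound _ K v HK Hbound Hv).
Qed.
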